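(* Let $p=q=3$ and let $\mathcal V_{\mathrm{phys}}$ and the operators $\hat A_{ij},\hat B_{ij},\hat C_{ij}$ be as in the context. If $W\subset\mathcal V_{\mathrm{phys}}$ is a linear subspace, $W\neq\{0\}$, invariant under all $\hat A_{ij},\hat B_{ij},\hat C_{ij}$, then $W=\mathcal V_{\mathrm{phys}}$.
   Context: On smooth functions of $(\boldsymbol u,\boldsymbol v)\in\mathbb{R}^3\times\mathbb{R}^3$ define $\hat A_{ij}=-i(u_i\partial_{u_j}-u_j\partial_{u_i})$, $\hat B_{ij}=-i(v_i\partial_{v_j}-v_j\partial_{v_i})$, $\hat C_{ij}=u_iv_j+\partial_{u_i}\partial_{v_j}$ for $1\le i,j\le3$. With $u=|\boldsymbol u|$, $v=|\boldsymbol v|$, let $\Psi_{lmn}=j_l(uv)Y_{lm}(\boldsymbol u/u)Y_{ln}(\boldsymbol v/v)$ for integers $l\ge0$, $|m|\le l$, $|n|\le l$, where $j_l$ is the spherical Bessel function of the first kind and $Y_{lm}$ are the standard orthonormal spherical harmonics on $S^2$ (Condon–Shortley phase convention). Let $\mathcal V_{\mathrm{phys}}=\mathrm{span}\{\Psi_{lmn}\}$ (a space invariant under the operators above). *)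

From Stdlib Require Import Reals ZArith.
From Coquelicot Require Import Coquelicot.

Record R3 := mkR3 { c1 : R; c2 : R; c3 : R }.

(** coordinate i (1 <= i <= 3); junk value 0 otherwise *)
Definition coord (i : nat) (x : R3) : R :=
  match i with 1 => c1 x | 2 => c2 x | 3 => c3 x | _ => 0%R end.

Definition upd (x : R3) (i : nat) (t : R) : R3 :=
  match i with
  | 1 => mkR3 t (c2 x) (c3 x)
  | 2 => mkR3 (c1 x) t (c3 x)
  | 3 => mkR3 (c1 x) (c2 x) t
  | _ => x end.

Definition nrm (x : R3) : R := sqrt (c1 x ^ 2 + c2 x ^ 2 + c3 x ^ 2).
Definition rscale (a : R) (x : R3) : R3 := mkR3 (a * c1 x) (a * c2 x) (a * c3 x).

Definition Fun6 := R3 -> R3 -> C.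
Definition zeroF : Fun6 := fun _ _ => 0%C.

Definition dU (j : nat) (f : Fun6) : Fun6 := fun u v =>
  (Derive (fun t => Re (f (upd u j t) v)) (coord j u),
   Derive (fun t => Im (f (upd u j t) v)) (coord j u)).
Definition dV (j : nat) (f : Fun6) : Fun6 := fun u v =>
  (Derive (fun t => Re (f u (upd v j t))) (coord j v),
   Derive (fun t => Im (f u (upd v j t))) (coord j v)).

Open Scope C_scope.

Definition opA (i j : nat) (f : Fun6) : Fun6 := fun u v =>
  - Ci * (RtoC (coord i u) * dU j f u v - RtoC (coord j u) * dU i f u v).
Definition opB (i j : nat) (f : Fun6) : Fun6 := fun u v =>
  - Ci * (RtoC (coord i v) * dV j f u v - RtoC (coord j v) * dV i f u v).
Definition opC (i j : nat) (f : Fun6) : Fun6 := fun u v =>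
  RtoC (coord i u * coord j v) * f u v + dU i (dV j f) u v.

Close Scope C_scope.

Fixpoint cpow (z : C) (n : nat) : C :=
  match n with O => RtoC 1 | S k => Cmult z (cpow z k) end.

(** odfact n = (2n+1)!! *)
Fixpoint odfact (n : nat) : nat :=
  match n with O => 1%nat | S k => ((2 * k + 3) * odfact k)%nat end.

(** jt l x = j_l(x) / x^l = sum_k (-1)^k x^(2k) / (2^k k! (2l+2k+1)!!) *)
Definition jt_coef (l n : nat) : R :=
  if Nat.even n then
    ((-1) ^ (n / 2) / (2 ^ (n / 2) * INR (fact (n / 2)) * INR (odfact (l + n / 2))))%R
  else 0%R.
Definition jt (l : nat) (x : R) : R := PSeries (jt_coef l) x.

Definition sph_j (l : nat) (x : R) : R := (x ^ l * jt l x)%R.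

Definition legendre (l : nat) (x : R) : R :=
  (/ (2 ^ l * INR (fact l)) * Derive_n (fun t => (t ^ 2 - 1) ^ l) l x)%R.
Definition dlegendre (l m : nat) (x : R) : R := Derive_n (legendre l) m x.

Definition Ynorm (l m : nat) : R :=
  sqrt ((2 * INR l + 1) / (4 * PI) * INR (fact (l - m)) / INR (fact (l + m))).

(** Orthonormal spherical harmonic Y_lm at a unit vector w (Condon-Shortley):
    for m >= 0, Y_lm = N (-1)^m (w1 + i w2)^m P_l^(m)(w3)
      [= N P_l^m(cos th) e^{i m phi}, P_l^m = (-1)^m (1-x^2)^{m/2} P_l^(m)];
    for m < 0, Y_lm = (-1)^|m| conj(Y_{l,|m|}) = N (w1 - i w2)^|m| P_l^(|m|)(w3). *)
Definition Ylm (l : nat) (m : Z) (w : R3) : C :=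
  let a := Z.abs_nat m in
  if (0 <=? m)%Z then
    Cmult (RtoC (Ynorm l a * (-1) ^ a * dlegendre l a (c3 w)))
          (cpow (c1 w, c2 w) a)
  else
    Cmult (RtoC (Ynorm l a * dlegendre l a (c3 w)))
          (cpow (c1 w, (- c2 w)%R) a).

(** solid harmonic |x|^l Y_lm(x/|x|), written so that it is the (polynomial)
    continuous extension at x = 0 *)
Definition solidY (l : nat) (m : Z) (x : R3) : C :=
  let a := Z.abs_nat m in
  let r := nrm x in
  if (0 <=? m)%Z then
    Cmult (RtoC (Ynorm l a * (-1) ^ a * r ^ (l - a) * dlegendre l a (c3 x / r)))
          (cpow (c1 x, c2 x) a)
  else
    Cmult (RtoC (Ynorm l a * r ^ (l - a) * dlegendre l a (c3 x / r)))
          (cpow (c1 x, (- c2 x)%R) a).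

(** Psi_lmn(u,v) = j_l(|u||v|) Y_lm(u/|u|) Y_ln(v/|v|) for u, v <> 0,
    extended by continuity (smoothly) to u = 0 or v = 0. *)
Definition Psi (l : nat) (m n : Z) : Fun6 := fun u v =>
  let s := (nrm u * nrm v)%R in
  if Req_EM_T s 0 then
    Cmult (RtoC (jt l s)) (Cmult (solidY l m u) (solidY l n v))
  else
    Cmult (RtoC (sph_j l s))
          (Cmult (Ylm l m (rscale (/ nrm u) u)) (Ylm l n (rscale (/ nrm v) v))).

Definition valid_lmn (l : nat) (m n : Z) : Prop :=
  (Z.abs m <= Z.of_nat l)%Z /\ (Z.abs n <= Z.of_nat l)%Z.

Inductive Vphys : Fun6 -> Prop :=
| Vphys0 : Vphys zeroF
| Vphys_step (l : nat) (m n : Z) (c : C) (f : Fun6) :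
    valid_lmn l m n -> Vphys f ->
    Vphys (fun u v => Cplus (Cmult c (Psi l m n u v)) (f u v)).

Definition is_subspace (W : Fun6 -> Prop) : Prop :=
  W zeroF /\
  (forall f g, W f -> W g -> W (fun u v => Cplus (f u v) (g u v))) /\
  (forall (c : C) f, W f -> W (fun u v => Cmult c (f u v))).

(* Since j_l(s) = s^l jt_l(s), each Psi_lmn factors as Y_lm(u) Y_ln(v) J_l(|u|^2 |v|^2) with
   solid harmonics Y_lm and an entire power series J_l.  A nonzero w in W is a finite
   combination of Psi's; as A_12, B_12 and L_- L_+ act diagonally on the Psi's with eigenvalues
   m, n and m(m+1) - l(l+1), subtracting eigenvalues isolates a single Psi_lmn in W.  The
   ladder operators L_+ = i A_31 - A_32 (and their B-analogues) then push m and n up to l, so W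
   contains Phi_l = zeta(u)^l zeta(v)^l J_l(|u|^2 |v|^2), zeta = x_1 + i x_2.  The operators
   C_ij act on these extremal functions through the Bessel recurrence
   J_l = (2l+3) J_(l+1) - y J_(l+2): the combination with weights (e_1 + i e_2)_i (e_1 + i e_2)_j
   sends Phi_l to a multiple of Phi_(l+1), and the conjugate combination, corrected by a term
   reached from Phi_(l+2) by lowering operators, sends Phi_(l+1) to Phi_l.  Hence every Phi_l,
   and by lowering every Psi_lmn, lies in W. *)

From Pilot Require Import Defs.
From Stdlib Require Import Reals ZArith.
From Coquelicot Require Import Coquelicot.
From Stdlib Require Import Lra Lia FunctionalExtensionality List Classical.
Import Defs.
Open Scope R_scope.

(** * Derivatives along a coordinate *)

Lemma rderiv_const (a x : R) : is_derive (fun _ => a) x 0.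
Proof. apply (is_derive_const (K:=R_AbsRing) (V:=R_NormedModule)). Qed.

Lemma rderiv_id (x : R) : is_derive (fun t => t) x 1.
Proof. apply (is_derive_id (K:=R_AbsRing)). Qed.

Lemma rderiv_plus f g (x a b : R) : is_derive f x a -> is_derive g x b -> is_derive (fun t => f t + g t) x (a + b).
Proof. intros; now apply (is_derive_plus (K:=R_AbsRing) (V:=R_NormedModule)). Qed.

Lemma rderiv_minus f g (x a b : R) : is_derive f x a -> is_derive g x b -> is_derive (fun t => f t - g t) x (a - b).
Proof. intros; now apply (is_derive_minus (K:=R_AbsRing) (V:=R_NormedModule)). Qed.

Lemma rderiv_mult f g (x a b : R) : is_derive f x a -> is_derive g x b -> is_derive (fun t => f t * g t) x (a * g x + f x * b).
Proof. intros; apply (is_derive_mult (K:=R_AbsRing)); auto. intros; apply Rmult_comm. Qed.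

Lemma rderiv_comp f g (x a b : R) : is_derive f (g x) a -> is_derive g x b -> is_derive (fun t => f (g t)) x (b * a).
Proof. intros; now apply (is_derive_comp (K:=R_AbsRing) (V:=R_NormedModule)). Qed.

Lemma rderiv_ext f g (x a : R) : (forall t, f t = g t) -> is_derive f x a -> is_derive g x a.
Proof. intros; now apply (is_derive_ext f g). Qed.

Lemma rderiv_eq f (x a b : R) : a = b -> is_derive f x a -> is_derive f x b.
Proof. intros ->; auto. Qed.

Lemma rderiv_pow f (x a : R) n : is_derive f x a -> is_derive (fun t => f t ^ n) x (INR n * f x ^ (pred n) * a).
Proof. intros H. eapply rderiv_eq. 2: apply (is_derive_pow f n x a H). ring. Qed.

Definition cderiv (h : R -> C) (t : R) (z : C) : Prop :=
  is_derive (fun s => Re (h s)) t (Re z) /\ is_derive (fun s => Im (h s)) t (Im z).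

Lemma cderiv_ext (h k : R -> C) t z : (forall s, h s = k s) -> cderiv h t z -> cderiv k t z.
Proof.
  intros E [H1 H2]; split.
  - apply (rderiv_ext (fun s => Re (h s))); [intros; now rewrite E|exact H1].
  - apply (rderiv_ext (fun s => Im (h s))); [intros; now rewrite E|exact H2].
Qed.

Lemma cderiv_eq h t a b : a = b -> cderiv h t a -> cderiv h t b.
Proof. intros ->; auto. Qed.

Lemma cderiv_const (c : C) t : cderiv (fun _ => c) t 0%C.
Proof. split; simpl; apply rderiv_const. Qed.

Lemma cderiv_RtoC (f : R -> R) t d : is_derive f t d -> cderiv (fun s => RtoC (f s)) t (RtoC d).
Proof. intros H; split; simpl; [exact H| apply rderiv_const]. Qed.

Lemma cderiv_plus h k t a b : cderiv h t a -> cderiv k t b -> cderiv (fun s => (h s + k s)%C) t (a + b)%C.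
Proof.
  intros [H1 H2] [K1 K2]; split; simpl.
  - apply (rderiv_plus (fun s => Re (h s)) (fun s => Re (k s))); auto.
  - apply (rderiv_plus (fun s => Im (h s)) (fun s => Im (k s))); auto.
Qed.

Lemma cderiv_mult h k t a b : cderiv h t a -> cderiv k t b ->
  cderiv (fun s => (h s * k s)%C) t (a * k t + h t * b)%C.
Proof.
  intros [H1 H2] [K1 K2]; split.
  - pose proof (rderiv_minus _ _ _ _ _ (rderiv_mult _ _ _ _ _ H1 K1) (rderiv_mult _ _ _ _ _ H2 K2)) as D.
    eapply rderiv_eq; [|exact D]. unfold Re, Im; simpl; ring.
  - pose proof (rderiv_plus _ _ _ _ _ (rderiv_mult _ _ _ _ _ H1 K2) (rderiv_mult _ _ _ _ _ H2 K1)) as D.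
    eapply rderiv_eq; [|exact D]. unfold Re, Im; simpl; ring.
Qed.

Lemma cderiv_scal (c : C) h t a : cderiv h t a -> cderiv (fun s => (c * h s)%C) t (c * a)%C.
Proof.
  intros H. eapply cderiv_eq.
  2: apply (cderiv_mult (fun _ => c) h t 0%C a); auto using cderiv_const.
  cbv beta. ring.
Qed.

Lemma C_ext (a b : C) : fst a = fst b -> snd a = snd b -> a = b.
Proof. intros; apply injective_projections; auto. Qed.

Lemma cpow_S z n : cpow z (S n) = (z * cpow z n)%C.
Proof. reflexivity. Qed.

Lemma cderiv_cpow h t a n : cderiv h t a ->
  cderiv (fun s => cpow (h s) n) t (RtoC (INR n) * cpow (h t) (pred n) * a)%C.
Proof.
  intros H; induction n.
  - simpl. eapply cderiv_eq. 2: apply cderiv_const. ring.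
  - simpl cpow. eapply cderiv_eq. 2: apply cderiv_mult; eauto.
    cbv beta. destruct n as [|n]; [simpl; ring|]. simpl pred. rewrite cpow_S.
    rewrite (S_INR (S n)), RtoC_plus. ring.
Qed.

Lemma cderiv_Derive h t z : cderiv h t z ->
  (Derive (fun s => Re (h s)) t, Derive (fun s => Im (h s)) t) = z.
Proof.
  intros [H1 H2].
  assert (E1 : Derive (fun s => Re (h s)) t = Re z) by (apply is_derive_unique; exact H1).
  assert (E2 : Derive (fun s => Im (h s)) t = Im z) by (apply is_derive_unique; exact H2).
  rewrite E1, E2.
  destruct z; reflexivity.
Qed.

Lemma coord_upd_same x j t : (1 <= j <= 3)%nat -> coord j (upd x j t) = t.
Proof. intros Hj. destruct j as [|[|[|[|]]]]; simpl; try reflexivity; lia. Qed.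

Lemma coord_upd_other x j k t : (1 <= j <= 3)%nat -> k <> j -> coord k (upd x j t) = coord k x.
Proof.
  intros Hj Hk. destruct j as [|[|[|[|]]]]; try lia;
  destruct k as [|[|[|[|]]]]; simpl; try reflexivity; lia.
Qed.

Lemma upd_coord x j : upd x j (coord j x) = x.
Proof. destruct x; destruct j as [|[|[|[|]]]]; reflexivity. Qed.

Definition origin : R3 := mkR3 0 0 0.

Definition sqn (x : R3) : R := c1 x ^ 2 + c2 x ^ 2 + c3 x ^ 2.

Definition zeta (x : R3) : C := (c1 x, c2 x).

Definition zetac (x : R3) : C := (c1 x, - c2 x).

Lemma funext2 (F G : Fun6) : (forall u v, F u v = G u v) -> F = G.
Proof. intros E. apply functional_extensionality; intros u. now apply functional_extensionality. Qed.

Lemma sqn_upd x j t : (1 <= j <= 3)%nat ->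
  sqn (upd x j t) = sqn x - coord j x ^ 2 + t ^ 2.
Proof. intros Hj. destruct x; destruct j as [|[|[|[|]]]]; try lia; unfold sqn; simpl; ring. Qed.

Lemma sqn_ge0 x : 0 <= sqn x.
Proof. unfold sqn. nra. Qed.

Lemma sqn_eq0 x : sqn x = 0 -> x = origin.
Proof.
  destruct x as [a b c]; unfold sqn; simpl; intros H.
  assert (a = 0) by nra. assert (b = 0) by nra. assert (c = 0) by nra. subst; reflexivity.
Qed.

Lemma sqn_pos x : x <> origin -> 0 < sqn x.
Proof.
  intros H. destruct (Rle_lt_or_eq_dec 0 (sqn x) (sqn_ge0 x)) as [h|h]; auto.
  exfalso; apply H, sqn_eq0; auto.
Qed.

Lemma nrm_pos x : x <> origin -> 0 < nrm x.
Proof. intros H. apply sqrt_lt_R0, sqn_pos, H. Qed.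

Lemma nrm_sqr x : nrm x ^ 2 = sqn x.
Proof. unfold nrm. rewrite <- Rsqr_pow2. apply Rsqr_sqrt, sqn_ge0. Qed.

(* [pd j (fun w => f w v) u] is literally [dU j f u v], and similarly for [dV]. *)
Definition has_pd (j : nat) (g : R3 -> C) (x : R3) (z : C) : Prop :=
  cderiv (fun t => g (upd x j t)) (coord j x) z.

Definition has_pdR (j : nat) (g : R3 -> R) (x : R3) (d : R) : Prop :=
  is_derive (fun t => g (upd x j t)) (coord j x) d.

Definition pd (j : nat) (g : R3 -> C) (x : R3) : C :=
  (Derive (fun t => Re (g (upd x j t))) (coord j x), Derive (fun t => Im (g (upd x j t))) (coord j x)).

Lemma pd_val j g x z : has_pd j g x z -> pd j g x = z.
Proof. intros H. apply (cderiv_Derive _ _ _ H). Qed.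

Lemma has_pd_ext j g h x z : (forall y, g y = h y) -> has_pd j g x z -> has_pd j h x z.
Proof. intros E H. eapply cderiv_ext; [|exact H]. intros; simpl; auto. Qed.

Lemma has_pd_eq j g x a b : a = b -> has_pd j g x a -> has_pd j g x b.
Proof. intros ->; auto. Qed.

Lemma has_pd_plus j g h x a b : has_pd j g x a -> has_pd j h x b ->
  has_pd j (fun y => (g y + h y)%C) x (a + b)%C.
Proof. intros; apply (cderiv_plus (fun t => g (upd x j t)) (fun t => h (upd x j t))); auto. Qed.

Lemma has_pd_mult j g h x a b : (1 <= j <= 3)%nat -> has_pd j g x a -> has_pd j h x b ->
  has_pd j (fun y => (g y * h y)%C) x (a * h x + g x * b)%C.
Proof.
  intros Hj Ha Hb. unfold has_pd.
  pose proof (cderiv_mult (fun t => g (upd x j t)) (fun t => h (upd x j t)) _ _ _ Ha Hb) as H.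
  simpl in H. rewrite upd_coord in H. exact H.
Qed.

Lemma has_pd_const j (c : C) x : has_pd j (fun _ => c) x 0%C.
Proof. apply cderiv_const. Qed.

Lemma has_pd_scal j (c : C) g x a : has_pd j g x a -> has_pd j (fun y => (c * g y)%C) x (c * a)%C.
Proof. intros; apply (cderiv_scal c (fun t => g (upd x j t))); auto. Qed.

Lemma has_pd_RtoC j f x d : has_pdR j f x d -> has_pd j (fun y => RtoC (f y)) x (RtoC d).
Proof. intros H; apply (cderiv_RtoC (fun t => f (upd x j t))); auto. Qed.

Lemma has_pd_cpow j g x a n : (1 <= j <= 3)%nat -> has_pd j g x a ->
  has_pd j (fun y => cpow (g y) n) x (RtoC (INR n) * cpow (g x) (pred n) * a)%C.
Proof.
  intros Hj H. pose proof (cderiv_cpow (fun t => g (upd x j t)) _ _ n H) as K.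
  simpl in K; rewrite upd_coord in K; exact K.
Qed.

Lemma has_pdR_coord j k x : (1 <= j <= 3)%nat ->
  has_pdR j (coord k) x (if Nat.eqb k j then 1 else 0).
Proof.
  intros Hj. unfold has_pdR. destruct (Nat.eqb_spec k j).
  - subst. apply (rderiv_ext (fun t => t)). intros; now rewrite coord_upd_same. apply rderiv_id.
  - apply (rderiv_ext (fun t => coord k x)). intros; now rewrite coord_upd_other.
    apply rderiv_const.
Qed.

Lemma has_pdR_sqn j x : (1 <= j <= 3)%nat -> has_pdR j sqn x (2 * coord j x).
Proof.
  intros Hj. unfold has_pdR.
  apply (rderiv_ext (fun t => sqn x - coord j x ^ 2 + t ^ 2)). intros; now rewrite sqn_upd.
  eapply rderiv_eq. 2: apply rderiv_plus; [apply rderiv_const| apply rderiv_pow, rderiv_id].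
  simpl; ring.
Qed.

Lemma has_pdR_comp j (G : R -> R) f x d dG : has_pdR j f x d -> is_derive G (f x) dG ->
  has_pdR j (fun y => G (f y)) x (dG * d).
Proof.
  intros H1 H2. unfold has_pdR in *.
  assert (H2' : is_derive G ((fun t => f (upd x j t)) (coord j x)) dG) by (simpl; rewrite upd_coord; exact H2).
  pose proof (rderiv_comp _ _ _ _ _ H2' H1) as D. eapply rderiv_eq; [|exact D]. ring.
Qed.

Lemma has_pdR_mult j f g x a b : has_pdR j f x a -> has_pdR j g x b ->
  has_pdR j (fun y => f y * g y) x (a * g x + f x * b).
Proof.
  intros H1 H2. unfold has_pdR in *. pose proof (rderiv_mult _ _ _ _ _ H1 H2) as K.
  cbv beta in K. rewrite upd_coord in K. exact K.
Qed.

Lemma has_pdR_const j (c : R) x : has_pdR j (fun _ => c) x 0.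
Proof. unfold has_pdR. apply (rderiv_const c). Qed.

Lemma has_pdR_ext j f g x d : (forall y, f y = g y) -> has_pdR j f x d -> has_pdR j g x d.
Proof. intros E H. eapply rderiv_ext; [|exact H]. intros; simpl; auto. Qed.

Lemma has_pdR_eq j f x a b : a = b -> has_pdR j f x a -> has_pdR j f x b.
Proof. intros ->; auto. Qed.

Definition dzeta (j : nat) : C := match j with 1 => 1%C | 2 => Ci | _ => 0%C end.

Definition dzetac (j : nat) : C := match j with 1 => 1%C | 2 => (- Ci)%C | _ => 0%C end.

Lemma has_pd_zeta j x : (1 <= j <= 3)%nat -> has_pd j zeta x (dzeta j).
Proof.
  intros Hj; destruct j as [|[|[|[|]]]]; try lia; split; simpl;
    solve [apply rderiv_id | apply rderiv_const].
Qed.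

Lemma has_pd_zetac j x : (1 <= j <= 3)%nat -> has_pd j zetac x (dzetac j).
Proof.
  intros Hj; destruct j as [|[|[|[|]]]]; try lia; split; simpl;
    try solve [apply rderiv_id | apply rderiv_const].
  - eapply rderiv_eq; [|apply (rderiv_const (c1 x))]. ring.
  - apply (rderiv_ext (fun t => 0 - t)); [intros; simpl; ring|].
    eapply rderiv_eq; [|apply rderiv_minus; [apply rderiv_const|apply rderiv_id]]. ring.
Qed.

(** * Legendre polynomials *)

Fixpoint peval (p : nat -> R) (d : nat) (x : R) : R :=
  match d with 0 => 0 | S d' => peval p d' x + p d' * x ^ d' end.

Definition pderiv (p : nat -> R) (k : nat) : R := INR (S k) * p (S k).

Fixpoint pderiv_n (n : nat) (p : nat -> R) : nat -> R :=
  match n with 0 => p | S n' => pderiv (pderiv_n n' p) end.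

Definition vanish_from (p : nat -> R) (N : nat) := forall k, (N <= k)%nat -> p k = 0.

Lemma is_derive_peval_S p d x : is_derive (peval p (S d)) x (peval (pderiv p) d x).
Proof.
  induction d.
  - simpl. apply (rderiv_ext (fun _ => p 0%nat)). intros; simpl; ring. apply rderiv_const.
  - apply (rderiv_ext (fun t => peval p (S d) t + p (S d) * t ^ (S d))). intros; reflexivity.
    eapply rderiv_eq. 2: apply rderiv_plus; [exact IHd|].
    2: apply (is_derive_scal (fun t => t ^ S d)), rderiv_pow, rderiv_id.
    cbn [peval pred]. unfold pderiv. ring.
Qed.

Lemma peval_vanish_from p N x : vanish_from p N -> forall e, peval p (N + e) x = peval p N x.
Proof.
  intros H e; induction e.
  - now rewrite Nat.add_0_r.
  - rewrite Nat.add_succ_r. simpl. rewrite IHe, H by lia. ring.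
Qed.

Lemma is_derive_peval p N x : vanish_from p N -> is_derive (peval p N) x (peval (pderiv p) N x).
Proof.
  intros H. apply (rderiv_ext (peval p (S N))).
  - intros t. replace (S N) with (N + 1)%nat by lia. apply peval_vanish_from, H.
  - apply is_derive_peval_S.
Qed.

Lemma pderiv_vanish_from p N : vanish_from p N -> vanish_from (pderiv p) N.
Proof. intros H k Hk. unfold pderiv. rewrite H by lia. ring. Qed.

Lemma pderiv_n_vanish_from p N n : vanish_from p N -> vanish_from (pderiv_n n p) N.
Proof. intros H; induction n; simpl; auto using pderiv_vanish_from. Qed.

Lemma Derive_n_peval p N n x : vanish_from p N -> Derive_n (peval p N) n x = peval (pderiv_n n p) N x.
Proof.
  intros H. revert x; induction n; intros x; simpl; auto.
  rewrite (Derive_ext _ (peval (pderiv_n n p) N)) by (intros; apply IHn).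
  apply is_derive_unique, is_derive_peval, pderiv_n_vanish_from, H.
Qed.

Lemma pderiv_n_add k l p : pderiv_n k (pderiv_n l p) = pderiv_n (k + l) p.
Proof. induction k; simpl; auto. now rewrite IHk. Qed.

Lemma pderiv_n_coef n p k : pderiv_n n p k = INR (fact (k + n)) / INR (fact k) * p (k + n)%nat.
Proof.
  revert k; induction n; intros k.
  - rewrite Nat.add_0_r. simpl pderiv_n. unfold Rdiv. rewrite Rinv_r; [ring|apply INR_fact_neq_0].
  - simpl pderiv_n. unfold pderiv. rewrite IHn. replace (S k + n)%nat with (k + S n)%nat by lia.
    rewrite (fact_simpl k). rewrite mult_INR.
    assert (INR (fact k) <> 0) by apply INR_fact_neq_0.
    assert (INR (S k) <> 0) by (apply not_0_INR; lia).
    unfold Rdiv. rewrite Rinv_mult. 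
    transitivity (INR (fact (k + S n)) * / INR (fact k) * p (k + S n)%nat * (INR (S k) * / INR (S k))); [ring|].
    rewrite Rinv_r by auto. ring.
Qed.

Lemma peval_const p d x : (forall k, (1 <= k)%nat -> p k = 0) -> peval p (S d) x = p 0%nat.
Proof.
  intros H; induction d.
  - simpl. ring.
  - change (peval p (S d) x + p (S d) * x ^ (S d) = p 0%nat). rewrite IHd, (H (S d)) by lia. ring.
Qed.

Lemma peval_0 p d x : (forall k, p k = 0) -> peval p d x = 0.
Proof. intros H; induction d; simpl; auto. rewrite IHd, H; ring. Qed.

Lemma peval_minus p q d x : peval (fun k => p k - q k) d x = peval p d x - peval q d x.
Proof. induction d; simpl; [ring|]. rewrite IHd; ring. Qed.

Definition shift2 (p : nat -> R) (k : nat) : R :=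
  match k with 0 | 1 => 0 | S (S k') => p k' end.

Lemma peval_shift2 p d x : peval (shift2 p) (S (S d)) x = x ^ 2 * peval p d x.
Proof. induction d; simpl in *; [ring|]. rewrite IHd. simpl. ring. Qed.

(* [sq1_coef l] lists the coefficients of (x^2 - 1)^l, and [dsq1 l n] is its n-th derivative. *)

Fixpoint sq1_coef (l : nat) : nat -> R :=
  match l with
  | 0 => fun k => if Nat.eqb k 0 then 1 else 0
  | S l' => fun k => shift2 (sq1_coef l') k - sq1_coef l' k
  end.

Lemma sq1_coef_vanish_from l : vanish_from (sq1_coef l) (2 * l + 1).
Proof.
  induction l; intros k Hk; simpl.
  - destruct k; [lia|reflexivity].
  - rewrite IHl by lia. unfold shift2. destruct k as [|[|k]]; try lia. rewrite IHl by lia. ring.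
Qed.

Lemma sq1_coef_lead l : sq1_coef l (2 * l)%nat = 1.
Proof.
  induction l; [reflexivity|].
  change (sq1_coef (S l) (2 * S l)%nat) with (shift2 (sq1_coef l) (2 * S l)%nat - sq1_coef l (2 * S l)%nat).
  replace (2 * S l)%nat with (S (S (2 * l))) by lia.
  rewrite (sq1_coef_vanish_from l (S (S (2 * l)))) by lia. cbn [shift2]. rewrite IHl. ring.
Qed.

Lemma peval_sq1_coef l x : peval (sq1_coef l) (2 * l + 1) x = (x ^ 2 - 1) ^ l.
Proof.
  induction l.
  - simpl. ring.
  - simpl sq1_coef. rewrite peval_minus. replace (2 * S l + 1)%nat with (S (S (2 * l + 1))) by lia.
    rewrite peval_shift2, IHl.
    replace (S (S (2 * l + 1))) with (2 * l + 1 + 2)%nat by lia.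
    rewrite peval_vanish_from by apply sq1_coef_vanish_from. rewrite IHl. simpl. ring.
Qed.

Definition rodrigues_c (l : nat) : R := / (2 ^ l * INR (fact l)).

Definition dsq1 (l n : nat) (x : R) : R := peval (pderiv_n n (sq1_coef l)) (2 * l + 1) x.

Lemma Derive_n_sq1_pow l n x : Derive_n (fun t => (t ^ 2 - 1) ^ l) n x = dsq1 l n x.
Proof.
  unfold dsq1. rewrite <- Derive_n_peval by apply sq1_coef_vanish_from.
  apply Derive_n_ext. intros; now rewrite peval_sq1_coef.
Qed.

Lemma is_derive_dsq1 l n x : is_derive (dsq1 l n) x (dsq1 l (S n) x).
Proof. unfold dsq1. apply is_derive_peval. apply pderiv_n_vanish_from, sq1_coef_vanish_from. Qed.

Lemma legendre_eq l x : legendre l x = rodrigues_c l * dsq1 l l x.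
Proof. unfold legendre, rodrigues_c. now rewrite Derive_n_sq1_pow. Qed.

Lemma dlegendre_eq l k x : dlegendre l k x = rodrigues_c l * dsq1 l (k + l) x.
Proof.
  unfold dlegendre.
  rewrite (Derive_n_ext (legendre l) (fun t => rodrigues_c l * dsq1 l l t)) by (intros; apply legendre_eq).
  rewrite Derive_n_scal_l. f_equal. unfold dsq1 at 1.
  rewrite Derive_n_peval by apply pderiv_n_vanish_from, sq1_coef_vanish_from. unfold dsq1.
  now rewrite pderiv_n_add.
Qed.

Lemma dlegendre_deriv l k x : is_derive (dlegendre l k) x (dlegendre l (S k) x).
Proof.
  apply (rderiv_ext (fun t => rodrigues_c l * dsq1 l (k + l) t)). intros; now rewrite dlegendre_eq.
  rewrite dlegendre_eq. simpl. apply is_derive_scal, is_derive_dsq1.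
Qed.

Lemma dlegendre_high l k x : (l < k)%nat -> dlegendre l k x = 0.
Proof.
  intros H. rewrite dlegendre_eq. unfold dsq1. rewrite peval_0. ring.
  intros j. rewrite pderiv_n_coef. rewrite sq1_coef_vanish_from by lia. ring.
Qed.

Lemma dlegendre_diag l x : dlegendre l l x = rodrigues_c l * INR (fact (2 * l)).
Proof.
  rewrite dlegendre_eq. unfold dsq1. replace (2 * l + 1)%nat with (S (2 * l)) by lia.
  rewrite peval_const.
  - rewrite pderiv_n_coef. replace (0 + (l + l))%nat with (2 * l)%nat by lia. rewrite sq1_coef_lead.
    simpl (fact 0). simpl INR. field.
  - intros k Hk. rewrite pderiv_n_coef. rewrite sq1_coef_vanish_from by lia. ring.
Qed.

Lemma rodrigues_c_pos l : 0 < rodrigues_c l.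
Proof. unfold rodrigues_c. apply Rinv_0_lt_compat, Rmult_lt_0_compat. apply pow_lt; lra. apply INR_fact_lt_0. Qed.

Lemma dlegendre_diag_neq0 l x : dlegendre l l x <> 0.
Proof.
  rewrite dlegendre_diag. apply Rmult_integral_contrapositive. split.
  apply Rgt_not_eq, rodrigues_c_pos. apply INR_fact_neq_0.
Qed.

Lemma is_derive_zero_fun (F : R -> R) x d : (forall t, F t = 0) -> is_derive F x d -> d = 0.
Proof.
  intros HF HD. assert (HD' : is_derive (fun _ => 0) x d) by (eapply rderiv_ext; [|exact HD]; auto).
  rewrite <- (is_derive_unique _ _ _ HD'). apply is_derive_unique, rderiv_const.
Qed.

Lemma dsq1_ode_base l x : (x ^ 2 - 1) * dsq1 l 1 x - 2 * INR l * x * dsq1 l 0 x = 0.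
Proof.
  assert (H : is_derive (dsq1 l 0) x (INR l * (x ^ 2 - 1) ^ pred l * (2 * x))).
  { apply (rderiv_ext (fun t => (t ^ 2 - 1) ^ l)).
    intros t. unfold dsq1. simpl pderiv_n. now rewrite peval_sq1_coef.
    apply (rderiv_pow (fun t => t ^ 2 - 1)). eapply rderiv_eq.
    2: apply (rderiv_minus (fun t => t ^ 2) (fun _ => 1)); [apply (rderiv_pow (fun t => t)), rderiv_id|apply rderiv_const].
    simpl; ring. }
  pose proof (is_derive_unique _ _ _ H) as E1.
  pose proof (is_derive_unique _ _ _ (is_derive_dsq1 l 0 x)) as E2.
  rewrite E1 in E2. rewrite <- E2.
  replace (dsq1 l 0 x) with ((x ^ 2 - 1) ^ l) by (unfold dsq1; simpl pderiv_n; now rewrite peval_sq1_coef).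
  destruct l. simpl. ring. simpl pred. simpl. ring.
Qed.

Lemma dsq1_ode_step l n (b c : R) :
  (forall x, (x ^ 2 - 1) * dsq1 l (S (S n)) x + b * x * dsq1 l (S n) x + c * dsq1 l n x = 0) ->
  forall x, (x ^ 2 - 1) * dsq1 l (S (S (S n))) x + (b + 2) * x * dsq1 l (S (S n)) x + (b + c) * dsq1 l (S n) x = 0.
Proof.
  intros H x.
  assert (D : is_derive (fun t => (t ^ 2 - 1) * dsq1 l (S (S n)) t + b * t * dsq1 l (S n) t + c * dsq1 l n t) x
     ((x ^ 2 - 1) * dsq1 l (S (S (S n))) x + (b + 2) * x * dsq1 l (S (S n)) x + (b + c) * dsq1 l (S n) x)).
  { eapply rderiv_eq. 2: apply rderiv_plus; [apply rderiv_plus|].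
    2: apply rderiv_mult; [eapply rderiv_minus; [apply rderiv_pow, rderiv_id|apply rderiv_const]|apply is_derive_dsq1].
    2: apply rderiv_mult; [apply (is_derive_scal (fun t => t)), rderiv_id|apply is_derive_dsq1].
    2: apply (is_derive_scal (dsq1 l n)), is_derive_dsq1.
    simpl. ring. }
  exact (is_derive_zero_fun _ _ _ H D).
Qed.

Lemma dsq1_ode_first l x : (x ^ 2 - 1) * dsq1 l 2 x + (2 - 2 * INR l) * x * dsq1 l 1 x + (- 2 * INR l) * dsq1 l 0 x = 0.
Proof.
  assert (D : is_derive (fun t => (t ^ 2 - 1) * dsq1 l 1 t - 2 * INR l * t * dsq1 l 0 t) x
     ((x ^ 2 - 1) * dsq1 l 2 x + (2 - 2 * INR l) * x * dsq1 l 1 x + (- 2 * INR l) * dsq1 l 0 x)).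
  { eapply rderiv_eq. 2: apply rderiv_minus.
    2: apply rderiv_mult; [eapply rderiv_minus; [apply rderiv_pow, rderiv_id|apply rderiv_const]|apply is_derive_dsq1].
    2: apply rderiv_mult; [apply (is_derive_scal (fun t => t)), rderiv_id|apply is_derive_dsq1].
    simpl. ring. }
  exact (is_derive_zero_fun _ _ _ (dsq1_ode_base l) D).
Qed.

Lemma dsq1_ode l n x : (x ^ 2 - 1) * dsq1 l (S (S n)) x + (2 * INR (S n) - 2 * INR l) * x * dsq1 l (S n) x
   + INR (S n) * (INR n - 2 * INR l) * dsq1 l n x = 0.
Proof.
  revert x; induction n; intros x.
  - pose proof (dsq1_ode_first l x). simpl INR.
    replace (2 * 1 - 2 * INR l) with (2 - 2 * INR l) by ring.
    replace (1 * (0 - 2 * INR l)) with (- 2 * INR l) by ring. exact H.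
  - pose proof (dsq1_ode_step l n _ _ IHn x) as K.
    replace (2 * INR (S (S n)) - 2 * INR l) with (2 * INR (S n) - 2 * INR l + 2) by (rewrite (S_INR (S n)); ring).
    replace (INR (S (S n)) * (INR (S n) - 2 * INR l)) with
      (2 * INR (S n) - 2 * INR l + INR (S n) * (INR n - 2 * INR l)) by (rewrite (S_INR (S n)), (S_INR n); ring).
    exact K.
Qed.

Lemma dlegendre_ode l k x :
  (x ^ 2 - 1) * dlegendre l (S (S k)) x + 2 * INR (S k) * x * dlegendre l (S k) x
  + (INR k * INR (S k) - INR l * INR (S l)) * dlegendre l k x = 0.
Proof.
  rewrite !dlegendre_eq. pose proof (dsq1_ode l (k + l) x) as H.
  replace (S (S k) + l)%nat with (S (S (k + l))) by lia.
  replace (S k + l)%nat with (S (k + l)) by lia.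
  replace (2 * INR (S (k + l)) - 2 * INR l) with (2 * INR (S k)) in H
    by (rewrite !S_INR, plus_INR; ring).
  replace (INR (S (k + l)) * (INR (k + l) - 2 * INR l)) with (INR k * INR (S k) - INR l * INR (S l)) in H
    by (rewrite !S_INR, plus_INR; ring).
  transitivity (rodrigues_c l * ((x ^ 2 - 1) * dsq1 l (S (S (k + l))) x + 2 * INR (S k) * x * dsq1 l (S (k + l)) x +
     (INR k * INR (S k) - INR l * INR (S l)) * dsq1 l (k + l) x)); [ring|]. rewrite H. ring.
Qed.

(** * The Bessel series *)

Definition jcoef (l k : nat) : R := (-1) ^ k / (2 ^ k * INR (fact k) * INR (odfact (l + k))).

Definition jser (l : nat) (y : R) : R := PSeries (jcoef l) y.

Lemma odfact_pos n : (0 < odfact n)%nat.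
Proof. induction n; simpl; lia. Qed.

Lemma odfact_neq0 n : INR (odfact n) <> 0.
Proof. apply not_0_INR. pose proof (odfact_pos n). lia. Qed.

Lemma odfact_S n : INR (odfact (S n)) = (2 * INR n + 3) * INR (odfact n).
Proof. change (odfact (S n)) with ((2 * n + 3) * odfact n)%nat. rewrite mult_INR, plus_INR, mult_INR. simpl. ring. Qed.

Lemma jcoef_neq0 l k : jcoef l k <> 0.
Proof.
  unfold jcoef, Rdiv. apply Rmult_integral_contrapositive_currified; [apply pow_nonzero; lra|].
  apply Rinv_neq_0_compat. repeat apply Rmult_integral_contrapositive_currified;
    [apply pow_nonzero; lra | apply INR_fact_neq_0 | apply odfact_neq0].
Qed.

Lemma jcoef_ratio l k : jcoef l (S k) / jcoef l k = - / (2 * INR (S k) * (2 * INR (l + k) + 3)).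
Proof.
  unfold jcoef. rewrite Nat.add_succ_r. rewrite odfact_S. rewrite fact_simpl, mult_INR.
  assert (INR (fact k) <> 0) by apply INR_fact_neq_0.
  assert (INR (odfact (l + k)) <> 0) by apply odfact_neq0.
  assert (INR (S k) <> 0) by (apply not_0_INR; lia).
  assert (2 * INR (l + k) + 3 <> 0) by (pose proof (pos_INR (l + k)); lra).
  assert (2 ^ k <> 0) by (apply pow_nonzero; lra).
  assert ((-1) ^ k <> 0) by (apply pow_nonzero; lra).
  simpl pow. field. repeat split; auto.
Qed.

Lemma CV_radius_jcoef l : CV_radius (jcoef l) = p_infty.
Proof.
  apply CV_radius_infinite_DAlembert. apply jcoef_neq0.
  apply (is_lim_seq_le_le (fun _ => 0) _ (fun n => / INR (S n))).
  - intros n. rewrite jcoef_ratio. rewrite Rabs_Ropp.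
    pose proof (pos_INR (l + n)). pose proof (lt_0_INR (S n) ltac:(lia)).
    rewrite Rabs_pos_eq.
    + split. apply Rlt_le, Rinv_0_lt_compat. nra.
      apply Rinv_le_contravar; nra.
    + apply Rlt_le, Rinv_0_lt_compat. nra.
  - apply is_lim_seq_const.
  - apply (is_lim_seq_incr_1 (fun n => / INR n)).
    replace (Finite 0) with (Rbar_inv p_infty) by reflexivity.
    apply is_lim_seq_inv. apply is_lim_seq_INR. discriminate.
Qed.

Lemma ex_pseries_jcoef l y : ex_pseries (jcoef l) y.
Proof. apply CV_radius_inside. rewrite CV_radius_jcoef. exact I. Qed.

Lemma PS_derive_jcoef l k : PS_derive (jcoef l) k = - / 2 * jcoef (S l) k.
Proof.
  unfold PS_derive, jcoef. rewrite Nat.add_succ_r. simpl (S l + k)%nat.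
  rewrite fact_simpl, mult_INR.
  assert (INR (fact k) <> 0) by apply INR_fact_neq_0.
  assert (INR (odfact (S (l + k))) <> 0) by apply odfact_neq0.
  assert (INR (S k) <> 0) by (apply not_0_INR; lia).
  assert (2 ^ k <> 0) by (apply pow_nonzero; lra).
  simpl pow. field. repeat split; auto.
Qed.

Lemma is_derive_jser l y : is_derive (jser l) y (- / 2 * jser (S l) y).
Proof.
  unfold jser. eapply rderiv_eq. 2: apply is_derive_PSeries; rewrite CV_radius_jcoef; exact I.
  rewrite (PSeries_ext _ (PS_scal (- / 2) (jcoef (S l)))).
  apply PSeries_scal. intros n. unfold PS_scal. rewrite PS_derive_jcoef. reflexivity.
Qed.

Definition jser1 (L : nat) (y : R) : R := - / 2 * jser (S L) y.

Definition jser2 (L : nat) (y : R) : R := / 4 * jser (S (S L)) y.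

Lemma is_derive_jser0 L : forall y, is_derive (jser L) y (jser1 L y).
Proof. intros; apply is_derive_jser. Qed.

Lemma is_derive_jser1 L : forall y, is_derive (jser1 L) y (jser2 L y).
Proof.
  intros y. unfold jser1, jser2. eapply rderiv_eq; [|apply is_derive_scal, is_derive_jser]. field.
Qed.

Lemma jcoef_rec l k : jcoef l k = (2 * INR l + 3) * jcoef (S l) k - PS_incr_1 (jcoef (S (S l))) k.
Proof.
  destruct k as [|k].
  - unfold jcoef. simpl PS_incr_1. rewrite !Nat.add_0_r. rewrite odfact_S.
    assert (INR (odfact l) <> 0) by apply odfact_neq0.
    assert (2 * INR l + 3 <> 0) by (pose proof (pos_INR l); lra).
    unfold zero; simpl. field. auto.
  - simpl PS_incr_1. unfold jcoef.
    replace (S (S l) + k)%nat with (S (S (l + k))) by lia.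
    replace (S l + S k)%nat with (S (S (l + k))) by lia.
    replace (l + S k)%nat with (S (l + k)) by lia.
    rewrite !odfact_S. rewrite fact_simpl, mult_INR.
    assert (INR (fact k) <> 0) by apply INR_fact_neq_0.
    assert (INR (odfact (l + k)) <> 0) by apply odfact_neq0.
    assert (INR (S k) <> 0) by (apply not_0_INR; lia).
    assert (2 * INR (l + k) + 3 <> 0) by (pose proof (pos_INR (l + k)); lra).
    assert (2 * INR (S (l + k)) + 3 <> 0) by (pose proof (pos_INR (S (l + k))); lra).
    assert (2 ^ k <> 0) by (apply pow_nonzero; lra).
    rewrite !S_INR in *. rewrite plus_INR in *.
    simpl pow. field. repeat split; auto.
Qed.

Lemma jser_rec l y : jser l y = (2 * INR l + 3) * jser (S l) y - y * jser (S (S l)) y.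
Proof.
  unfold jser. rewrite <- PSeries_incr_1. rewrite <- PSeries_scal.
  rewrite <- PSeries_minus.
  - apply PSeries_ext. intros n. unfold PS_minus, PS_scal. rewrite jcoef_rec. reflexivity.
  - apply ex_pseries_scal. apply Rmult_comm. apply ex_pseries_jcoef.
  - apply ex_pseries_incr_1, ex_pseries_jcoef.
Qed.

Lemma even_double k : Nat.even (2 * k) = true.
Proof. rewrite Nat.even_mul. reflexivity. Qed.

Lemma even_double_S k : Nat.even (2 * k + 1) = false.
Proof. rewrite Nat.even_add, even_double. reflexivity. Qed.

Lemma jt_jser l s : jt l s = jser l (s ^ 2).
Proof.
  unfold jt. rewrite PSeries_odd_even.
  - rewrite (PSeries_ext (fun n => jt_coef l (2 * n + 1)) (fun _ => 0)).
    rewrite PSeries_const_0. rewrite Rmult_0_r, Rplus_0_r. unfold jser. apply PSeries_ext.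
    intros n. unfold jt_coef. rewrite even_double. rewrite (Nat.mul_comm 2 n), Nat.div_mul by lia.
    reflexivity.
    intros n. unfold jt_coef. rewrite even_double_S. reflexivity.
  - eapply ex_pseries_ext; [|apply (ex_pseries_jcoef l)]. intros n. unfold jt_coef.
    rewrite even_double.
    rewrite (Nat.mul_comm 2 n), Nat.div_mul by lia. reflexivity.
  - apply (ex_pseries_ext (PS_scal 0 (jcoef l))). intros n. unfold PS_scal, jt_coef.
    rewrite even_double_S.
    unfold scal; simpl; unfold mult; simpl. ring.
    apply ex_pseries_scal. apply Rmult_comm. apply ex_pseries_jcoef.
Qed.

(** * Solid harmonics and the functions Psi *)

Definition legR (l k : nat) (x : R3) : R := nrm x ^ (l - k) * dlegendre l k (c3 x / nrm x).

Lemma solidY_legR l m x :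
  solidY l m x =
  if (0 <=? m)%Z then (RtoC ((Ynorm l (Z.abs_nat m) * (-1) ^ Z.abs_nat m) * legR l (Z.abs_nat m) x) * cpow (zeta x) (Z.abs_nat m))%C
  else (RtoC (Ynorm l (Z.abs_nat m) * legR l (Z.abs_nat m) x) * cpow (zetac x) (Z.abs_nat m))%C.
Proof.
  unfold solidY, legR. destruct (0 <=? m)%Z; f_equal; f_equal; ring.
Qed.

Lemma cpow_scal (s : R) z n : cpow (RtoC s * z)%C n = (RtoC (s ^ n) * cpow z n)%C.
Proof.
  induction n; simpl.
  - apply injective_projections; simpl; ring.
  - rewrite IHn. rewrite RtoC_mult. ring.
Qed.

Lemma pow_mul_inv_pow r l a : r <> 0 -> (a <= l)%nat -> r ^ l * (/ r) ^ a = r ^ (l - a).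
Proof.
  intros Hr Ha. replace l with ((l - a) + a)%nat at 1 by lia. rewrite pow_add.
  rewrite Rmult_assoc, <- Rpow_mult_distr, Rinv_r, pow1 by auto. ring.
Qed.

Lemma solidY_Ylm l m x : x <> origin -> (Z.abs_nat m <= l)%nat ->
  (RtoC (nrm x ^ l) * Ylm l m (rscale (/ nrm x) x))%C = solidY l m x.
Proof.
  intros Hx Ha. pose proof (nrm_pos x Hx) as Hr.
  set (a := Z.abs_nat m) in *. set (r := nrm x) in *.
  unfold Ylm, solidY. fold a. fold r. simpl c1; simpl c2; simpl c3.
  assert (E1 : ((/ r * c1 x)%R, (/ r * c2 x)%R) = (RtoC (/ r) * (c1 x, c2 x))%C)
    by (apply injective_projections; simpl; ring).
  assert (E2 : ((/ r * c1 x)%R, (- (/ r * c2 x))%R) = (RtoC (/ r) * (c1 x, (- c2 x)%R))%C)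
    by (apply injective_projections; simpl; ring).
  rewrite E1, E2, !cpow_scal.
  assert (E3 : / r * c3 x = c3 x / r) by (unfold Rdiv; ring). rewrite E3.
  assert (E4 : r ^ l * (/ r) ^ a = r ^ (l - a)) by (apply pow_mul_inv_pow; auto; lra).
  destruct (0 <=? m)%Z.
  - transitivity (RtoC (r ^ l * (/ r) ^ a * (Ynorm l a * (-1) ^ a * dlegendre l a (c3 x / r))) * cpow (c1 x, c2 x) a)%C.
    { rewrite !RtoC_mult. ring. }
    rewrite E4. f_equal. f_equal. ring.
  - transitivity (RtoC (r ^ l * (/ r) ^ a * (Ynorm l a * dlegendre l a (c3 x / r))) * cpow (c1 x, (- c2 x)%R) a)%C.
    { rewrite !RtoC_mult. ring. }
    rewrite E4. f_equal. f_equal. ring.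
Qed.

Lemma nrm_origin : nrm origin = 0.
Proof. unfold nrm, origin. simpl c1; simpl c2; simpl c3. replace (0 ^ 2 + 0 ^ 2 + 0 ^ 2) with 0 by ring. apply sqrt_0. Qed.

(* The factors |u|^l |v|^l of j_l(|u||v|) turn Y_lm(u/|u|) Y_ln(v/|v|) into solid harmonics. *)
Lemma Psi_solidY l m n u v : valid_lmn l m n ->
  Psi l m n u v = (solidY l m u * solidY l n v * RtoC (jser l (sqn u * sqn v)))%C.
Proof.
  intros [Hm Hn]. unfold Psi.
  destruct (Req_EM_T (nrm u * nrm v) 0) as [E|E].
  - rewrite jt_jser. replace ((nrm u * nrm v) ^ 2) with (sqn u * sqn v).
    ring. rewrite Rpow_mult_distr, !nrm_sqr. ring.
  - assert (Hu : u <> origin) by (intros ->; apply E; rewrite nrm_origin; ring).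
    assert (Hv : v <> origin) by (intros ->; apply E; rewrite nrm_origin; ring).
    rewrite <- (solidY_Ylm l m u Hu ltac:(lia)), <- (solidY_Ylm l n v Hv ltac:(lia)).
    unfold sph_j. rewrite jt_jser.
    replace ((nrm u * nrm v) ^ 2) with (sqn u * sqn v) by (rewrite Rpow_mult_distr, !nrm_sqr; ring).
    rewrite Rpow_mult_distr. rewrite !RtoC_mult. ring.
Qed.

Lemma Psi_swap l m n u v : valid_lmn l m n -> Psi l m n v u = Psi l n m u v.
Proof.
  intros H. rewrite !Psi_solidY; [| destruct H; split; auto | auto].
  rewrite Rmult_comm. ring.
Qed.

Definition kron3 (j : nat) : R := if Nat.eqb j 3 then 1 else 0.

Lemma has_pdR_nrm j x : (1 <= j <= 3)%nat -> x <> origin -> has_pdR j nrm x (coord j x / nrm x).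
Proof.
  intros Hj Hx. unfold has_pdR, nrm.
  pose proof (sqn_pos x Hx) as Hp.
  assert (H : is_derive (fun t => sqn (upd x j t)) (coord j x) (2 * coord j x)) by (apply has_pdR_sqn; auto).
  assert (Hp' : 0 < sqn (upd x j (coord j x))) by (rewrite upd_coord; auto).
  pose proof (is_derive_sqrt _ _ _ H Hp') as K. cbv beta in K. rewrite upd_coord in K.
  eapply rderiv_eq; [|exact K]. unfold nrm. fold (sqn x). field. apply Rgt_not_eq, sqrt_lt_R0; auto.
Qed.

Lemma has_pdR_c3 j x : (1 <= j <= 3)%nat -> has_pdR j c3 x (kron3 j).
Proof.
  intros Hj. pose proof (has_pdR_coord j 3 x Hj) as H. unfold kron3.
  destruct (Nat.eqb_spec j 3), (Nat.eqb_spec 3 j); try lia; exact H.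
Qed.

Definition ct (x : R3) : R := c3 x / nrm x.

Lemma has_pdR_ct j x : (1 <= j <= 3)%nat -> x <> origin ->
  has_pdR j ct x (kron3 j / nrm x - c3 x * coord j x / nrm x ^ 3).
Proof.
  intros Hj Hx. pose proof (nrm_pos x Hx) as Hr.
  assert (H1 := has_pdR_c3 j x Hj).
  assert (H2 : has_pdR j (fun y => / nrm y) x (- (coord j x / nrm x) / nrm x ^ 2)).
  { unfold has_pdR. pose proof (has_pdR_nrm j x Hj Hx) as K. unfold has_pdR in K.
    assert (Hn : (fun t => nrm (upd x j t)) (coord j x) <> 0) by (simpl; rewrite upd_coord; lra).
    pose proof (is_derive_inv _ _ _ K Hn) as K2. simpl in K2. rewrite upd_coord in K2. exact K2. }
  pose proof (has_pdR_mult _ _ _ _ _ _ H1 H2) as K. unfold ct.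
  assert (K' : has_pdR j ct x (kron3 j * / nrm x + c3 x * (- (coord j x / nrm x) / nrm x ^ 2))).
  { eapply has_pdR_ext; [|exact K]. intros; unfold ct, Rdiv; reflexivity. }
  eapply has_pdR_eq; [|exact K']. field. lra.
Qed.

Definition dlegR (l k j : nat) (x : R3) : R :=
  INR (l - k) * nrm x ^ pred (l - k) * (coord j x / nrm x) * dlegendre l k (ct x)
  + nrm x ^ (l - k) * (dlegendre l (S k) (ct x) * (kron3 j / nrm x - c3 x * coord j x / nrm x ^ 3)).

Lemma has_pdR_legR l k j x : (1 <= j <= 3)%nat -> x <> origin -> has_pdR j (legR l k) x (dlegR l k j x).
Proof.
  intros Hj Hx.
  assert (H1 : has_pdR j (fun y => nrm y ^ (l - k)) x (INR (l - k) * nrm x ^ pred (l - k) * (coord j x / nrm x))).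
  { unfold has_pdR. pose proof (has_pdR_nrm j x Hj Hx) as K. unfold has_pdR in K.
    pose proof (rderiv_pow _ _ _ (l - k) K) as K2. simpl in K2. rewrite upd_coord in K2. exact K2. }
  assert (H2 : has_pdR j (fun y => dlegendre l k (ct y)) x
                 (dlegendre l (S k) (ct x) * (kron3 j / nrm x - c3 x * coord j x / nrm x ^ 3))).
  { apply has_pdR_comp. apply has_pdR_ct; auto. apply dlegendre_deriv. }
  pose proof (has_pdR_mult _ _ _ _ _ _ H1 H2) as K. unfold legR.
  eapply has_pdR_ext; [|exact K]. intros; reflexivity.
Qed.

Lemma rot_legR l k i j x : x <> origin ->
  coord i x * dlegR l k j x - coord j x * dlegR l k i x =
  legR l (S k) x * (coord i x * kron3 j - coord j x * kron3 i).
Proof.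
  intros Hx. pose proof (nrm_pos x Hx) as Hr. unfold dlegR, legR. fold (ct x).
  destruct (Nat.lt_ge_cases k l) as [Hk|Hk].
  - replace (l - k)%nat with (S (l - S k)) by lia. simpl pred. simpl pow.
    field. lra.
  - rewrite (dlegendre_high l (S k)) by lia. replace (l - k)%nat with 0%nat by lia. simpl. ring.
Qed.

(* The associated Legendre equation, written in the homogeneous variables x_3 and |x|. *)
Lemma legR_lower l b x : x <> origin -> (S b <= l)%nat ->
  2 * INR (S b) * c3 x * legR l (S b) x - (c1 x ^ 2 + c2 x ^ 2) * legR l (S (S b)) x
  = (INR l + INR (S b)) * (INR l - INR b) * legR l b x.
Proof.
  intros Hx Hb. pose proof (nrm_pos x Hx) as Hr.
  pose proof (nrm_sqr x) as Hs. unfold sqn in Hs.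
  pose proof (dlegendre_ode l b (ct x)) as O.
  assert (Ex : c3 x = ct x * nrm x) by (unfold ct; field; lra).
  unfold legR. fold (ct x).
  set (t := ct x) in *. set (r := nrm x) in *.
  set (Q0 := dlegendre l b t) in *. set (Q1 := dlegendre l (S b) t) in *.
  set (Q2 := dlegendre l (S (S b)) t) in *.
  assert (E12 : c1 x ^ 2 + c2 x ^ 2 = r ^ 2 - c3 x ^ 2) by lra.
  rewrite E12, Ex.
  destruct (Nat.eq_dec (S b) l) as [E|E].
  - subst l. replace (S b - S (S b))%nat with 0%nat by lia.
    replace (S b - S b)%nat with 0%nat by lia.
    replace (S b - b)%nat with 1%nat by lia.
    assert (Q2 = 0) by (unfold Q2; apply dlegendre_high; lia). rewrite H in *.
    simpl pow. rewrite !S_INR in *.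
    transitivity (r * (2 * (INR b + 1) * t * Q1)). ring.
    assert (O2 : 2 * (INR b + 1) * t * Q1 = - ((INR b * (INR b + 1) - (INR b + 1) * (INR b + 1 + 1)) * Q0)) by lra.
    rewrite O2. ring.
  - replace (l - b)%nat with (S (S (l - S (S b)))) by lia.
    replace (l - S b)%nat with (S (l - S (S b))) by lia.
    set (e := (l - S (S b))%nat). simpl pow.
    assert (O' : (t ^ 2 - 1) * Q2 + 2 * INR (S b) * t * Q1 = - (INR b * INR (S b) - INR l * INR (S l)) * Q0) by lra.
    rewrite !S_INR in *.
    transitivity (r ^ e * r * r * ((t ^ 2 - 1) * Q2 + 2 * (INR b + 1) * t * Q1)). simpl; ring.
    rewrite O'. ring.
Qed.

Definition rot (i j : nat) (g : R3 -> C) (x : R3) : C :=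
  (RtoC (coord i x) * pd j g x - RtoC (coord j x) * pd i g x)%C.

Lemma opA_rot i j f u v : opA i j f u v = (- Ci * rot i j (fun w => f w v) u)%C.
Proof. reflexivity. Qed.

Lemma has_pd_legR_cpow l a (Z : R3 -> C) (dZ : nat -> C) j x :
  (1 <= j <= 3)%nat -> x <> origin -> has_pd j Z x (dZ j) ->
  has_pd j (fun y => RtoC (legR l a y) * cpow (Z y) a)%C x
    (RtoC (dlegR l a j x) * cpow (Z x) a + RtoC (legR l a x) * (RtoC (INR a) * cpow (Z x) (pred a) * dZ j))%C.
Proof.
  intros Hj Hx HZ. apply has_pd_mult; auto.
  apply has_pd_RtoC, has_pdR_legR; auto. apply has_pd_cpow; auto.
Qed.

Lemma rot_legR_cpow l a (Z : R3 -> C) (dZ : nat -> C) i j x :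
  (1 <= i <= 3)%nat -> (1 <= j <= 3)%nat -> x <> origin ->
  has_pd i Z x (dZ i) -> has_pd j Z x (dZ j) ->
  rot i j (fun y => RtoC (legR l a y) * cpow (Z y) a)%C x =
  (RtoC (legR l (S a) x * (coord i x * kron3 j - coord j x * kron3 i)) * cpow (Z x) a
   + RtoC (legR l a x) * RtoC (INR a) * cpow (Z x) (pred a) * (RtoC (coord i x) * dZ j - RtoC (coord j x) * dZ i))%C.
Proof.
  intros Hi Hj Hx HZi HZj. unfold rot.
  rewrite (pd_val _ _ _ _ (has_pd_legR_cpow l a Z dZ j x Hj Hx HZj)).
  rewrite (pd_val _ _ _ _ (has_pd_legR_cpow l a Z dZ i x Hi Hx HZi)).
  rewrite <- (rot_legR l a i j x Hx).
  rewrite RtoC_minus, !RtoC_mult. ring.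
Qed.

Definition zsgn (m : Z) (x : R3) : C := if (0 <=? m)%Z then zeta x else zetac x.

Definition dzsgn (m : Z) (j : nat) : C := if (0 <=? m)%Z then dzeta j else dzetac j.

Definition harm (l : nat) (m : Z) (x : R3) : C :=
  (RtoC (legR l (Z.abs_nat m) x) * cpow (zsgn m x) (Z.abs_nat m))%C.

Lemma rot_harm l m i j x : (1 <= i <= 3)%nat -> (1 <= j <= 3)%nat -> x <> origin ->
  rot i j (harm l m) x =
  (RtoC (legR l (S (Z.abs_nat m)) x * (coord i x * kron3 j - coord j x * kron3 i)) * cpow (zsgn m x) (Z.abs_nat m)
   + RtoC (legR l (Z.abs_nat m) x) * RtoC (INR (Z.abs_nat m)) * cpow (zsgn m x) (pred (Z.abs_nat m)) *
     (RtoC (coord i x) * dzsgn m j - RtoC (coord j x) * dzsgn m i))%C.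
Proof.
  intros Hi Hj Hx. unfold harm, zsgn, dzsgn. destruct (0 <=? m)%Z.
  - apply rot_legR_cpow; auto; apply has_pd_zeta; auto.
  - apply rot_legR_cpow; auto; apply has_pd_zetac; auto.
Qed.

Lemma rot12_harm l m x : x <> origin -> rot 1 2 (harm l m) x = (Ci * RtoC (IZR m) * harm l m x)%C.
Proof.
  intros Hx. rewrite rot_harm by (auto; lia). unfold harm, zsgn, dzsgn, kron3. simpl Nat.eqb. cbv iota.
  destruct (Z.leb_spec 0 m) as [Hm|Hm].
  - replace (IZR m) with (INR (Z.abs_nat m)) by (rewrite INR_IZR_INZ; f_equal; lia).
    destruct (Z.abs_nat m) as [|b].
    + apply C_ext; simpl; ring.
    + simpl pred. rewrite cpow_S. destruct (cpow (zeta x) b) as [p q]. unfold zeta.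
      apply C_ext; simpl; ring.
  - replace (IZR m) with (- INR (Z.abs_nat m)) by (rewrite INR_IZR_INZ; rewrite <- opp_IZR; f_equal; lia).
    destruct (Z.abs_nat m) as [|b].
    + apply C_ext; simpl; ring.
    + simpl pred. rewrite cpow_S. destruct (cpow (zetac x) b) as [p q]. unfold zetac.
      apply C_ext; simpl; ring.
Qed.

Definition raise_c (l : nat) (m : Z) : R :=
  if (0 <=? m)%Z then -1 else (INR l + INR (Z.abs_nat m)) * (INR l - INR (Z.abs_nat m) + 1).

Definition lower_c (l : nat) (m : Z) : R :=
  if (0 <? m)%Z then (INR l + INR (Z.abs_nat m)) * (INR l - INR (Z.abs_nat m) + 1) else -1.

Lemma raise_harm l m x : x <> origin -> (Z.abs_nat m <= l)%nat ->
  (rot 3 1 (harm l m) x + Ci * rot 3 2 (harm l m) x)%C = (RtoC (raise_c l m) * harm l (m + 1) x)%C.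
Proof.
  intros Hx Hl. rewrite !rot_harm by (auto; lia). unfold raise_c, harm, zsgn, dzsgn, kron3. simpl Nat.eqb.
  cbv iota.
  destruct (Z.leb_spec 0 m) as [Hm|Hm].
  - replace (0 <=? m + 1)%Z with true by (symmetry; apply Z.leb_le; lia).
    replace (Z.abs_nat (m + 1)) with (S (Z.abs_nat m)) by lia.
    set (a := Z.abs_nat m). rewrite cpow_S. simpl dzeta.
    destruct (cpow (zeta x) a) as [p q]. destruct (cpow (zeta x) (pred a)) as [p' q']. unfold zeta.
    apply C_ext; simpl; ring.
  - assert (Ha : (1 <= Z.abs_nat m)%nat) by lia.
    assert (E : cpow (if (0 <=? m + 1)%Z then zeta x else zetac x) (Z.abs_nat (m + 1)) = cpow (zetac x) (Z.abs_nat (m+1))).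
    { destruct (Z.leb_spec 0 (m + 1)). replace (Z.abs_nat (m + 1)) with 0%nat by lia. reflexivity.
      reflexivity. }
    rewrite E. replace (Z.abs_nat m) with (S (Z.abs_nat (m + 1))) in * by lia.
    set (b := Z.abs_nat (m + 1)) in *. simpl pred.
    pose proof (legR_lower l b x Hx Hl) as K.
    replace (INR l - INR (S b) + 1) with (INR l - INR b) by (rewrite S_INR; ring).
    transitivity (RtoC ((INR l + INR (S b)) * (INR l - INR b) * legR l b x) * cpow (zetac x) b)%C.
    2:{ rewrite !RtoC_mult. ring. }
    rewrite <- K. rewrite cpow_S. simpl dzetac.
    destruct (cpow (zetac x) b) as [p q]. unfold zetac.
    apply C_ext; simpl; ring.
Qed.

Lemma lower_harm l m x : x <> origin -> (Z.abs_nat m <= l)%nat ->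
  (rot 3 1 (harm l m) x + - Ci * rot 3 2 (harm l m) x)%C = (RtoC (lower_c l m) * harm l (m - 1) x)%C.
Proof.
  intros Hx Hl. rewrite !rot_harm by (auto; lia). unfold lower_c, harm, zsgn, dzsgn, kron3. simpl Nat.eqb.
  cbv iota.
  destruct (Z.ltb_spec 0 m) as [Hm|Hm].
  - replace (0 <=? m)%Z with true by (symmetry; apply Z.leb_le; lia).
    replace (0 <=? m - 1)%Z with true by (symmetry; apply Z.leb_le; lia).
    replace (Z.abs_nat m) with (S (Z.abs_nat (m - 1))) in * by lia.
    set (b := Z.abs_nat (m - 1)) in *. simpl pred.
    pose proof (legR_lower l b x Hx Hl) as K.
    replace (INR l - INR (S b) + 1) with (INR l - INR b) by (rewrite S_INR; ring).
    transitivity (RtoC ((INR l + INR (S b)) * (INR l - INR b) * legR l b x) * cpow (zeta x) b)%C.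
    2:{ rewrite !RtoC_mult. ring. }
    rewrite <- K. rewrite cpow_S. simpl dzeta.
    destruct (cpow (zeta x) b) as [p q]. unfold zeta.
    apply C_ext; simpl; ring.
  - replace (0 <=? m - 1)%Z with false by (symmetry; apply Z.leb_gt; lia).
    replace (Z.abs_nat (m - 1)) with (S (Z.abs_nat m)) by lia.
    destruct (Z.eq_dec m 0) as [E0|E0].
    + subst m. simpl Z.abs_nat. simpl (0 <=? 0)%Z. cbv iota. simpl pred. simpl dzeta.
      simpl cpow. unfold zeta, zetac. apply C_ext; simpl; ring.
    + replace (0 <=? m)%Z with false by (symmetry; apply Z.leb_gt; lia).
      set (a := Z.abs_nat m). rewrite cpow_S. simpl dzetac.
      destruct (cpow (zetac x) a) as [p q]. destruct (cpow (zetac x) (pred a)) as [p' q'].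
      unfold zetac.
      apply C_ext; simpl; ring.
Qed.

Lemma rot_ext i j g h x : (forall y, g y = h y) -> rot i j g x = rot i j h x.
Proof. intros E. now replace h with g by (apply functional_extensionality; auto). Qed.

Lemma rot_scal i j (c : C) g x gi gj : has_pd i g x gi -> has_pd j g x gj ->
  rot i j (fun y => c * g y)%C x = (c * rot i j g x)%C.
Proof.
  intros Hi Hj. unfold rot.
  rewrite (pd_val _ _ _ _ (has_pd_scal _ c _ _ _ Hi)), (pd_val _ _ _ _ (has_pd_scal _ c _ _ _ Hj)).
  rewrite (pd_val _ _ _ _ Hi), (pd_val _ _ _ _ Hj). ring.
Qed.

Lemma rot_origin i j g : rot i j g origin = 0%C.
Proof.
  unfold rot. assert (forall k, coord k origin = 0) by (intros [|[|[|[|]]]]; reflexivity).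
  rewrite !H. ring.
Qed.

Lemma has_pdR_radial j (G : R -> R) (dG : R -> R) s u :
  (1 <= j <= 3)%nat -> (forall y, is_derive G y (dG y)) ->
  has_pdR j (fun w => G (sqn w * s)%R) u (dG (sqn u * s) * (2 * coord j u * s)).
Proof.
  intros Hj HG. apply has_pdR_comp; auto.
  eapply has_pdR_eq; [|apply has_pdR_mult; [apply has_pdR_sqn; auto|apply has_pdR_const]]. cbv beta.
  ring.
Qed.

Lemma has_pd_radial_prod j (P : R3 -> C) (c : C) (G dG : R -> R) (s : R) u p :
  (1 <= j <= 3)%nat -> (forall y, is_derive G y (dG y)) -> has_pd j P u p ->
  has_pd j (fun w => P w * c * RtoC (G (sqn w * s)%R))%C u
    (p * c * RtoC (G (sqn u * s)%R) + P u * c * RtoC (dG (sqn u * s) * (2 * coord j u * s))%R)%C.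
Proof.
  intros Hj HG HP.
  eapply has_pd_eq; [|apply has_pd_mult; [auto|apply has_pd_mult; [auto|exact HP|apply has_pd_const]|]].
  2: apply has_pd_RtoC, has_pdR_radial; auto.
  cbv beta. ring.
Qed.

(* Rotations x_i d_j - x_j d_i annihilate functions of |x|^2. *)
Lemma rot_radial_prod i j (P : R3 -> C) (c : C) (G dG : R -> R) (s : R) u pi pj :
  (1 <= i <= 3)%nat -> (1 <= j <= 3)%nat -> (forall y, is_derive G y (dG y)) ->
  has_pd i P u pi -> has_pd j P u pj ->
  rot i j (fun w => P w * c * RtoC (G (sqn w * s)%R))%C u = (rot i j P u * c * RtoC (G (sqn u * s)%R))%C.
Proof.
  intros Hi Hj HG HPi HPj. unfold rot.
  rewrite (pd_val _ _ _ _ (has_pd_radial_prod i P c G dG s u pi Hi HG HPi)).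
  rewrite (pd_val _ _ _ _ (has_pd_radial_prod j P c G dG s u pj Hj HG HPj)).
  rewrite (pd_val _ _ _ _ HPi), (pd_val _ _ _ _ HPj).
  rewrite !RtoC_mult. ring.
Qed.

Lemma has_pd_harm l m j x : (1 <= j <= 3)%nat -> x <> origin ->
  has_pd j (harm l m) x
    (RtoC (dlegR l (Z.abs_nat m) j x) * cpow (zsgn m x) (Z.abs_nat m)
     + RtoC (legR l (Z.abs_nat m) x) * (RtoC (INR (Z.abs_nat m)) * cpow (zsgn m x) (pred (Z.abs_nat m)) * dzsgn m j))%C.
Proof.
  intros Hj Hx. unfold harm, zsgn, dzsgn. destruct (0 <=? m)%Z.
  - apply has_pd_legR_cpow; auto. apply has_pd_zeta; auto.
  - apply has_pd_legR_cpow; auto. apply has_pd_zetac; auto.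
Qed.

Lemma ex_pd_harm l m j x : (1 <= j <= 3)%nat -> x <> origin -> exists z, has_pd j (harm l m) x z.
Proof. intros; eexists; apply has_pd_harm; auto. Qed.

Definition harm_c (l : nat) (m : Z) : R := if (0 <=? m)%Z then (Ynorm l (Z.abs_nat m) * (-1) ^ Z.abs_nat m) else Ynorm l (Z.abs_nat m).

Lemma solidY_harm l m x : solidY l m x = (RtoC (harm_c l m) * harm l m x)%C.
Proof.
  rewrite solidY_legR. unfold harm_c, harm, zsgn. destruct (0 <=? m)%Z; rewrite RtoC_mult; ring.
Qed.

Lemma Ynorm_pos l a : (a <= l)%nat -> 0 < Ynorm l a.
Proof.
  intros H. unfold Ynorm. apply sqrt_lt_R0.
  pose proof PI_RGT_0. pose proof (pos_INR l).
  pose proof (INR_fact_lt_0 (l - a)). pose proof (INR_fact_lt_0 (l + a)).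
  unfold Rdiv. repeat apply Rmult_lt_0_compat; try lra; apply Rinv_0_lt_compat; lra.
Qed.

Lemma harm_c_neq0 l m : (Z.abs_nat m <= l)%nat -> harm_c l m <> 0.
Proof.
  intros H. unfold harm_c. pose proof (Ynorm_pos l _ H).
  destruct (0 <=? m)%Z.
  - apply Rmult_integral_contrapositive_currified. lra. apply pow_nonzero; lra.
  - lra.
Qed.

Lemma Psi_harm l m n u v : valid_lmn l m n ->
  Psi l m n u v = (RtoC (harm_c l m) * harm l m u * (RtoC (harm_c l n) * harm l n v) * RtoC (jser l (sqn u * sqn v)))%C.
Proof. intros H. rewrite Psi_solidY by auto. rewrite !solidY_harm. reflexivity. Qed.

Lemma solidY_origin l m : (1 <= l)%nat -> (Z.abs_nat m <= l)%nat -> solidY l m origin = 0%C.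
Proof.
  intros Hl Hm. rewrite solidY_legR. unfold legR. rewrite nrm_origin.
  destruct (Nat.eq_dec (Z.abs_nat m) l) as [E|E].
  - rewrite E. destruct l; [lia|]. unfold zeta, zetac, origin; simpl.
    destruct (0 <=? m)%Z; apply C_ext; simpl; ring.
  - replace (l - Z.abs_nat m)%nat with (S (l - Z.abs_nat m - 1)) by lia. simpl pow.
    destruct (0 <=? m)%Z; apply C_ext; simpl; ring.
Qed.

Lemma Psi_origin l m n v : valid_lmn l m n -> (1 <= l)%nat -> Psi l m n origin v = 0%C.
Proof.
  intros H Hl. rewrite Psi_solidY by auto. rewrite solidY_origin; auto. ring.
  destruct H; lia.
Qed.

Lemma ex_pd_scaled_harm l m k x : (1 <= k <= 3)%nat -> x <> origin ->
  exists z, has_pd k (fun w => RtoC (harm_c l m) * harm l m w)%C x z.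
Proof. intros Hk Hx. destruct (ex_pd_harm l m k x Hk Hx) as [z Hz]. eexists. apply has_pd_scal, Hz. Qed.

Lemma rot_Psi i j l m n u v : valid_lmn l m n -> u <> origin ->
  (1 <= i <= 3)%nat -> (1 <= j <= 3)%nat ->
  rot i j (fun w => Psi l m n w v) u =
  (RtoC (harm_c l m) * rot i j (harm l m) u * (RtoC (harm_c l n) * harm l n v) * RtoC (jser l (sqn u * sqn v)))%C.
Proof.
  intros H Hu Hi Hj.
  rewrite (rot_ext _ _ _ (fun w => (RtoC (harm_c l m) * harm l m w) * (RtoC (harm_c l n) * harm l n v) * RtoC (jser l (sqn w * sqn v)%R))%C)
    by (intros; apply Psi_harm; auto).
  destruct (ex_pd_scaled_harm l m i u Hi Hu) as [zi Hzi].
  destruct (ex_pd_scaled_harm l m j u Hj Hu) as [zj Hzj].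
  rewrite (rot_radial_prod i j _ _ (jser l) _ (sqn v) u zi zj Hi Hj (is_derive_jser0 l) Hzi Hzj).
  destruct (ex_pd_harm l m i u Hi Hu) as [wi Hwi]. destruct (ex_pd_harm l m j u Hj Hu) as [wj Hwj].
  rewrite (rot_scal i j _ _ _ _ _ Hwi Hwj). reflexivity.
Qed.

Lemma origin_dec (u : R3) : {u = origin} + {u <> origin}.
Proof.
  destruct (Req_EM_T (sqn u) 0) as [h|h].
  - left; apply sqn_eq0, h.
  - right; intros ->; apply h; unfold sqn, origin; simpl; ring.
Qed.

Lemma opA12_Psi l m n u v : valid_lmn l m n -> opA 1 2 (Psi l m n) u v = (RtoC (IZR m) * Psi l m n u v)%C.
Proof.
  intros H. rewrite opA_rot.
  destruct (origin_dec u) as [->|Hu].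
  - rewrite rot_origin. destruct l as [|l].
    + destruct H as [H1 H2]. replace m with 0%Z by lia. simpl. ring.
    + rewrite Psi_origin by (auto; lia). ring.
  - rewrite rot_Psi by (auto; lia). rewrite rot12_harm by auto. rewrite Psi_harm by auto.
    destruct (harm l m u), (harm l n v). apply C_ext; simpl; ring.
Qed.

Definition Lup (F : Fun6) : Fun6 := fun u v => (Ci * opA 3 1 F u v + (-1) * opA 3 2 F u v)%C.

Definition Ldn (F : Fun6) : Fun6 := fun u v => (Ci * opA 3 1 F u v + 1 * opA 3 2 F u v)%C.

Lemma Lup_rot F u v : Lup F u v = (rot 3 1 (fun w => F w v) u + Ci * rot 3 2 (fun w => F w v) u)%C.
Proof.
  unfold Lup. rewrite !opA_rot.
  destruct (rot 3 1 (fun w => F w v) u), (rot 3 2 (fun w => F w v) u). apply C_ext; simpl; ring.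
Qed.

Lemma Ldn_rot F u v : Ldn F u v = (rot 3 1 (fun w => F w v) u + - Ci * rot 3 2 (fun w => F w v) u)%C.
Proof.
  unfold Ldn. rewrite !opA_rot.
  destruct (rot 3 1 (fun w => F w v) u), (rot 3 2 (fun w => F w v) u). apply C_ext; simpl; ring.
Qed.

Definition up_c (l : nat) (m : Z) : R := harm_c l m * raise_c l m / harm_c l (m + 1).

Definition dn_c (l : nat) (m : Z) : R := harm_c l m * lower_c l m / harm_c l (m - 1).

Lemma valid_succ l m n : valid_lmn l m n -> (m < Z.of_nat l)%Z -> valid_lmn l (m + 1) n.
Proof. intros [H1 H2] H; split; lia. Qed.

Lemma valid_pred l m n : valid_lmn l m n -> (- Z.of_nat l < m)%Z -> valid_lmn l (m - 1) n.
Proof. intros [H1 H2] H; split; lia. Qed.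

Lemma rot_comb_Psi (c : C) l m n u v : valid_lmn l m n -> u <> origin ->
  (rot 3 1 (fun w => Psi l m n w v) u + c * rot 3 2 (fun w => Psi l m n w v) u)%C =
  (RtoC (harm_c l m) * (rot 3 1 (harm l m) u + c * rot 3 2 (harm l m) u)
   * (RtoC (harm_c l n) * harm l n v) * RtoC (jser l (sqn u * sqn v)))%C.
Proof. intros. rewrite !rot_Psi by (auto; lia). ring. Qed.

Lemma RtoC_rescale (a b c d : R) (z w1 w2 : C) : a * b = c * d ->
  (RtoC c * (RtoC d * z) * w1 * w2 = RtoC a * (RtoC b * z * w1 * w2))%C.
Proof.
  intros E. transitivity (RtoC (c * d) * z * w1 * w2)%C; [rewrite RtoC_mult; ring|].
  rewrite <- E, RtoC_mult. ring.
Qed.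

Lemma Lup_Psi l m n u v : valid_lmn l m n -> (m < Z.of_nat l)%Z ->
  Lup (Psi l m n) u v = (RtoC (up_c l m) * Psi l (m + 1) n u v)%C.
Proof.
  intros H Hm. pose proof (valid_succ l m n H Hm) as H'. destruct H, H'.
  rewrite Lup_rot. destruct (origin_dec u) as [->|Hu].
  - rewrite !rot_origin, Psi_origin by (try split; lia). ring.
  - rewrite rot_comb_Psi, raise_harm, (Psi_harm l (m + 1)) by (try split; auto; lia).
    apply RtoC_rescale. unfold up_c. field. apply harm_c_neq0; lia.
Qed.

Lemma Ldn_Psi l m n u v : valid_lmn l m n -> (- Z.of_nat l < m)%Z ->
  Ldn (Psi l m n) u v = (RtoC (dn_c l m) * Psi l (m - 1) n u v)%C.
Proof.
  intros H Hm. pose proof (valid_pred l m n H Hm) as H'. destruct H, H'.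
  rewrite Ldn_rot. destruct (origin_dec u) as [->|Hu].
  - rewrite !rot_origin, Psi_origin by (try split; lia). ring.
  - rewrite rot_comb_Psi, lower_harm, (Psi_harm l (m - 1)) by (try split; auto; lia).
    apply RtoC_rescale. unfold dn_c. field. apply harm_c_neq0; lia.
Qed.

Lemma harm_top l x : harm l (Z.of_nat l + 1) x = 0%C.
Proof.
  unfold harm, legR. replace (Z.abs_nat (Z.of_nat l + 1)) with (S l) by lia.
  rewrite dlegendre_high by lia. rewrite Rmult_0_r. ring.
Qed.

Lemma Lup_Psi_top l n u v : valid_lmn l (Z.of_nat l) n -> Lup (Psi l (Z.of_nat l) n) u v = 0%C.
Proof.
  intros H. rewrite Lup_rot. destruct (origin_dec u) as [->|Hu].
  - rewrite !rot_origin. ring.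
  - rewrite rot_comb_Psi, raise_harm, harm_top by (auto; lia). ring.
Qed.

Lemma raise_c_neq0 l m : (- Z.of_nat l <= m)%Z -> (m < Z.of_nat l)%Z -> raise_c l m <> 0.
Proof.
  intros H1 H2. unfold raise_c. destruct (Z.leb_spec 0 m). lra.
  pose proof (pos_INR l). pose proof (pos_INR (Z.abs_nat m)).
  assert (INR (Z.abs_nat m) <= INR l) by (apply le_INR; lia).
  apply Rmult_integral_contrapositive_currified.
  - assert (0 < INR (Z.abs_nat m)) by (apply lt_0_INR; lia). lra.
  - lra.
Qed.

Lemma lower_c_neq0 l m : (- Z.of_nat l < m)%Z -> (m <= Z.of_nat l)%Z -> lower_c l m <> 0.
Proof.
  intros H1 H2. unfold lower_c. destruct (Z.ltb_spec 0 m); [|lra].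
  pose proof (pos_INR l). pose proof (pos_INR (Z.abs_nat m)).
  assert (INR (Z.abs_nat m) <= INR l) by (apply le_INR; lia).
  apply Rmult_integral_contrapositive_currified.
  - assert (0 < INR (Z.abs_nat m)) by (apply lt_0_INR; lia). lra.
  - lra.
Qed.

Lemma up_c_neq0 l m : (- Z.of_nat l <= m)%Z -> (m < Z.of_nat l)%Z -> up_c l m <> 0.
Proof.
  intros H1 H2. unfold up_c. unfold Rdiv. repeat apply Rmult_integral_contrapositive_currified.
  apply harm_c_neq0; lia. apply raise_c_neq0; lia. apply Rinv_neq_0_compat, harm_c_neq0; lia.
Qed.

Lemma dn_c_neq0 l m : (- Z.of_nat l < m)%Z -> (m <= Z.of_nat l)%Z -> dn_c l m <> 0.
Proof.
  intros H1 H2. unfold dn_c. unfold Rdiv. repeat apply Rmult_integral_contrapositive_currified.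
  apply harm_c_neq0; lia. apply lower_c_neq0; lia. apply Rinv_neq_0_compat, harm_c_neq0; lia.
Qed.

(** * Separable functions and the operators C_ij *)

Definition sepF (P Q : R3 -> C) (G : R -> R) : Fun6 :=
  fun u v => (P u * Q v * RtoC (G (sqn u * sqn v)%R))%C.

Definition grad (P : R3 -> C) (dP : nat -> R3 -> C) : Prop :=
  forall k x, (1 <= k <= 3)%nat -> has_pd k P x (dP k x).

Lemma dV_sepF P Q dQ (G G1 : R -> R) j :
  (1 <= j <= 3)%nat -> grad Q dQ -> (forall y, is_derive G y (G1 y)) ->
  forall u v, dV j (sepF P Q G) u v =
    (P u * dQ j v * RtoC (G (sqn u * sqn v)%R) + P u * Q v * RtoC (G1 (sqn u * sqn v) * (2 * coord j v * sqn u))%R)%C.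
Proof.
  intros Hj HQ HG u v.
  assert (K : has_pd j (fun w => Q w * P u * RtoC (G (sqn w * sqn u)%R))%C v
    (dQ j v * P u * RtoC (G (sqn v * sqn u)%R) + Q v * P u * RtoC (G1 (sqn v * sqn u) * (2 * coord j v * sqn u))%R)%C).
  { apply (has_pd_radial_prod j Q (P u) G G1 (sqn u) v); auto. }
  assert (K' : has_pd j (fun w => sepF P Q G u w) v
    (dQ j v * P u * RtoC (G (sqn v * sqn u)%R) + Q v * P u * RtoC (G1 (sqn v * sqn u) * (2 * coord j v * sqn u))%R)%C).
  { eapply has_pd_ext; [|exact K]. intros y. unfold sepF. rewrite (Rmult_comm (sqn u)). ring. }
  pose proof (pd_val _ _ _ _ K') as E. unfold pd in E. unfold dV. rewrite E.
  rewrite (Rmult_comm (sqn v)). ring.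
Qed.

Lemma has_pd_mul_sqn P dP k x : (1 <= k <= 3)%nat -> has_pd k P x (dP k x) ->
  has_pd k (fun w => P w * RtoC (sqn w))%C x (dP k x * RtoC (sqn x) + P x * RtoC (2 * coord k x)%R)%C.
Proof. intros Hk H. apply has_pd_mult; auto. apply has_pd_RtoC, has_pdR_sqn; auto. Qed.

Lemma dUdV_sepF P dP Q dQ (G G1 G2 : R -> R) i j :
  (1 <= i <= 3)%nat -> (1 <= j <= 3)%nat -> grad P dP -> grad Q dQ ->
  (forall y, is_derive G y (G1 y)) -> (forall y, is_derive G1 y (G2 y)) ->
  forall u v, dU i (dV j (sepF P Q G)) u v =
   (dP i u * dQ j v * RtoC (G (sqn u * sqn v)%R)
    + P u * dQ j v * RtoC (G1 (sqn u * sqn v) * (2 * coord i u * sqn v))%R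
    + (dP i u * RtoC (sqn u) + P u * RtoC (2 * coord i u)%R) * Q v * RtoC (2 * coord j v)%R * RtoC (G1 (sqn u * sqn v)%R)
    + P u * RtoC (sqn u) * Q v * RtoC (2 * coord j v) * RtoC (G2 (sqn u * sqn v) * (2 * coord i u * sqn v))%R)%C.
Proof.
  intros Hi Hj HP HQ HG HG1 u v.
  assert (EV : forall w, dV j (sepF P Q G) w v =
     (P w * dQ j v * RtoC (G (sqn w * sqn v)%R) + (P w * RtoC (sqn w)) * (Q v * RtoC (2 * coord j v)%R) * RtoC (G1 (sqn w * sqn v)%R))%C).
  { intros w. rewrite (dV_sepF P Q dQ G G1 j Hj HQ HG w v). rewrite !RtoC_mult. ring. }
  assert (K1 := has_pd_radial_prod i P (dQ j v) G G1 (sqn v) u (dP i u) Hi HG (HP i u Hi)).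
  assert (K2 := has_pd_radial_prod i (fun w => P w * RtoC (sqn w))%C (Q v * RtoC (2 * coord j v)%R)%C G1 G2 (sqn v) u _ Hi HG1
                  (has_pd_mul_sqn P dP i u Hi (HP i u Hi))).
  assert (K := has_pd_plus _ _ _ _ _ _ K1 K2).
  assert (K' : has_pd i (fun w => dV j (sepF P Q G) w v) u
     (dP i u * dQ j v * RtoC (G (sqn u * sqn v)%R) + P u * dQ j v * RtoC (G1 (sqn u * sqn v) * (2 * coord i u * sqn v))%R +
      ((dP i u * RtoC (sqn u) + P u * RtoC (2 * coord i u)%R) * (Q v * RtoC (2 * coord j v)%R) * RtoC (G1 (sqn u * sqn v)%R) +
       P u * RtoC (sqn u) * (Q v * RtoC (2 * coord j v)%R) * RtoC (G2 (sqn u * sqn v) * (2 * coord i u * sqn v))%R))%C).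
  { eapply has_pd_ext; [|exact K]. intros w. rewrite EV. reflexivity. }
  pose proof (pd_val _ _ _ _ K') as E. unfold pd in E. unfold dU. rewrite E. ring.
Qed.

Definition zpow (L : nat) (x : R3) : C := cpow (zeta x) L.

Definition dzpow (L : nat) (k : nat) (x : R3) : C := (RtoC (INR L) * cpow (zeta x) (pred L) * dzeta k)%C.

Lemma grad_zpow L : grad (zpow L) (dzpow L).
Proof. intros k x Hk. unfold zpow, dzpow. apply has_pd_cpow; auto. apply has_pd_zeta; auto. Qed.

Definition Phi (L : nat) : Fun6 := sepF (zpow L) (zpow L) (jser L).

Definition Craise (F : Fun6) : Fun6 := fun u v =>
  ((opC 1 1 F u v + Ci * opC 1 2 F u v) + (Ci * opC 2 1 F u v + (-1) * opC 2 2 F u v))%C.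

Definition Clower (F : Fun6) : Fun6 := fun u v =>
  ((opC 1 1 F u v + (- Ci) * opC 1 2 F u v) + ((- Ci) * opC 2 1 F u v + (-1) * opC 2 2 F u v))%C.

Lemma opC_sepF P dP Q dQ i j G G1 G2 u v :
  (1 <= i <= 3)%nat -> (1 <= j <= 3)%nat -> grad P dP -> grad Q dQ ->
  (forall y, is_derive G y (G1 y)) -> (forall y, is_derive G1 y (G2 y)) ->
  opC i j (sepF P Q G) u v =
  (RtoC (coord i u * coord j v) * (P u * Q v * RtoC (G (sqn u * sqn v)%R)) +
   (dP i u * dQ j v * RtoC (G (sqn u * sqn v)%R)
    + P u * dQ j v * RtoC (G1 (sqn u * sqn v) * (2 * coord i u * sqn v))%R
    + (dP i u * RtoC (sqn u) + P u * RtoC (2 * coord i u)%R) * Q v * RtoC (2 * coord j v)%R * RtoC (G1 (sqn u * sqn v)%R)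
    + P u * RtoC (sqn u) * Q v * RtoC (2 * coord j v) * RtoC (G2 (sqn u * sqn v) * (2 * coord i u * sqn v))%R))%C.
Proof.
  intros. unfold opC. rewrite (dUdV_sepF P dP Q dQ G G1 G2 i j); auto.
Qed.

Lemma Craise_Phi L u v : Craise (Phi L) u v = (RtoC (2 * INR L + 1) * Phi (S L) u v)%C.
Proof.
  unfold Craise, Phi.
  rewrite !(opC_sepF (zpow L) (dzpow L) (zpow L) (dzpow L) _ _ (jser L) (jser1 L) (jser2 L)) by (auto using grad_zpow, is_derive_jser0, is_derive_jser1; lia).
  unfold sepF, zpow, dzpow, jser1, jser2. rewrite (jser_rec L).
  set (x := sqn u * sqn v).
  set (j1 := jser (S L) x). set (j2 := jser (S (S L)) x).
  rewrite !cpow_S.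
  destruct (cpow (zeta u) L) as [a1 b1]. destruct (cpow (zeta v) L) as [a2 b2].
  destruct (cpow (zeta u) (pred L)) as [c1' d1']. destruct (cpow (zeta v) (pred L)) as [c2' d2'].
  unfold x, sqn, zeta. simpl dzeta. simpl coord.
  apply C_ext; simpl; field.
Qed.

Definition qpoly (K : nat) (x : R3) : R := c3 x ^ 2 - sqn x / (2 * INR (S K) + 1).

Definition Qfun (K : nat) : Fun6 := fun u v =>
  (cpow (zeta u) K * cpow (zeta v) K * RtoC (qpoly K u * qpoly K v * jser (S (S K)) (sqn u * sqn v)))%C.

Lemma Clower_Phi K u v : Clower (Phi (S K)) u v =
  (RtoC (4 * INR (S K) ^ 2 / (2 * INR (S K) + 1)) * Phi K u v + RtoC (2 * INR (S K) + 1) * Qfun K u v)%C.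
Proof.
  unfold Clower, Phi.
  rewrite !(opC_sepF (zpow (S K)) (dzpow (S K)) (zpow (S K)) (dzpow (S K)) _ _ (jser (S K)) (jser1 (S K)) (jser2 (S K))) by (auto using grad_zpow, is_derive_jser0, is_derive_jser1; lia).
  unfold Qfun, sepF, zpow, dzpow, jser1, jser2, qpoly.
  set (x := sqn u * sqn v).
  rewrite (jser_rec K x). rewrite (jser_rec (S K) x).
  set (j2 := jser (S (S K)) x). set (j3 := jser (S (S (S K))) x).
  assert (HK : 2 * INR (S K) + 1 <> 0) by (pose proof (pos_INR (S K)); lra).
  rewrite !cpow_S. simpl pred.
  destruct (cpow (zeta u) K) as [a1 b1]. destruct (cpow (zeta v) K) as [a2 b2].
  unfold x, sqn, zeta. simpl dzeta. simpl coord. rewrite !S_INR in *.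
  apply C_ext; simpl; field; auto.
Qed.

Definition lowerP (P : R3 -> C) (x : R3) : C := (rot 3 1 P x - Ci * rot 3 2 P x)%C.

Lemma Ldn_sepF P dP Q l u v : grad P dP ->
  Ldn (sepF P Q (jser l)) u v = (lowerP P u * Q v * RtoC (jser l (sqn u * sqn v)))%C.
Proof.
  intros HP. rewrite Ldn_rot. unfold sepF, lowerP.
  rewrite !(rot_radial_prod _ _ P (Q v) (jser l) (jser1 l) (sqn v) u (dP _ u) (dP _ u)) by (auto using is_derive_jser0; try lia; apply HP; lia).
  ring.
Qed.

Definition swapF (F : Fun6) : Fun6 := fun u v => F v u.

Definition Ldn_v (F : Fun6) : Fun6 := fun u v => (Ci * opB 3 1 F u v + 1 * opB 3 2 F u v)%C.

Lemma Ldn_v_swap F u v : Ldn_v F u v = Ldn (swapF F) v u.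
Proof. reflexivity. Qed.

Lemma swap_sepF P Q G : swapF (sepF P Q G) = sepF Q P G.
Proof.
  apply funext2; intros u v. unfold swapF, sepF. rewrite Rmult_comm. ring.
Qed.

Lemma Ldn_v_sepF P Q dQ l u v : grad Q dQ ->
  Ldn_v (sepF P Q (jser l)) u v = (P u * lowerP Q v * RtoC (jser l (sqn u * sqn v)))%C.
Proof.
  intros HQ. rewrite Ldn_v_swap, swap_sepF, (Ldn_sepF Q dQ P l v u HQ). rewrite Rmult_comm. ring.
Qed.

Lemma rot_val i j P dP x : grad P dP -> (1 <= i <= 3)%nat -> (1 <= j <= 3)%nat ->
  rot i j P x = (RtoC (coord i x) * dP j x - RtoC (coord j x) * dP i x)%C.
Proof. intros HP Hi Hj. unfold rot. rewrite (pd_val _ _ _ _ (HP j x Hj)), (pd_val _ _ _ _ (HP i x Hi)). reflexivity. Qed.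

Lemma lowerP_zpow L x : lowerP (zpow (S L)) x = (RtoC (2 * INR (S L)) * (RtoC (c3 x) * zpow L x))%C.
Proof.
  unfold lowerP. rewrite !(rot_val _ _ _ (dzpow (S L))) by (auto using grad_zpow; lia).
  unfold dzpow, zpow. simpl pred. simpl dzeta. simpl coord.
  destruct (cpow (zeta x) L) as [a b]. rewrite RtoC_mult. apply C_ext; simpl; ring.
Qed.

Definition x3zpow (L : nat) (x : R3) : C := (RtoC (c3 x) * zpow L x)%C.

Definition dx3zpow (L : nat) (k : nat) (x : R3) : C := (RtoC (kron3 k) * zpow L x + RtoC (c3 x) * dzpow L k x)%C.

Lemma grad_x3zpow L : grad (x3zpow L) (dx3zpow L).
Proof.
  intros k x Hk. unfold x3zpow, dx3zpow. apply has_pd_mult; auto.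
  apply has_pd_RtoC, has_pdR_c3; auto. apply grad_zpow; auto.
Qed.

Lemma lowerP_x3zpow K x : lowerP (x3zpow (S K)) x = (RtoC (2 * INR (S K) + 1) * (RtoC (qpoly K x) * zpow K x))%C.
Proof.
  unfold lowerP. rewrite !(rot_val _ _ _ (dx3zpow (S K))) by (auto using grad_x3zpow; lia).
  unfold dx3zpow, dzpow, zpow, qpoly, kron3. simpl pred. simpl dzeta. simpl coord. simpl Nat.eqb.
  cbv iota.
  rewrite !cpow_S.
  assert (HK : 2 * INR (S K) + 1 <> 0) by (pose proof (pos_INR (S K)); lra).
  destruct (cpow (zeta x) K) as [a b]. unfold zeta, sqn. rewrite !S_INR in *.
  apply C_ext; simpl; field; auto.
Qed.

Lemma RtoC_neq0 (r : R) : r <> 0 -> RtoC r <> 0%C.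
Proof. intros H E. apply H. injection E. auto. Qed.

Lemma RtoC_inj (a b : R) : RtoC a = RtoC b -> a = b.
Proof. intros H. injection H. auto. Qed.

Lemma Psi_swapF l m n : valid_lmn l m n -> swapF (Psi l m n) = Psi l n m.
Proof.
  intros H. apply funext2; intros u v. unfold swapF. apply Psi_swap; auto.
Qed.

Lemma valid_swap l m n : valid_lmn l m n -> valid_lmn l n m.
Proof. intros [? ?]; split; auto. Qed.

Definition Lup_v (F : Fun6) : Fun6 := fun u v => (Ci * opB 3 1 F u v + (-1) * opB 3 2 F u v)%C.

Lemma Lup_v_Psi l m n u v : valid_lmn l m n -> (n < Z.of_nat l)%Z ->
  Lup_v (Psi l m n) u v = (RtoC (up_c l n) * Psi l m (n + 1) u v)%C.
Proof.
  intros H Hn. change (Lup_v (Psi l m n) u v) with (Lup (swapF (Psi l m n)) v u).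
  rewrite Psi_swapF by auto. rewrite Lup_Psi by (auto using valid_swap).
  rewrite Psi_swap; auto. destruct H; split; lia.
Qed.

Lemma Ldn_v_Psi l m n u v : valid_lmn l m n -> (- Z.of_nat l < n)%Z ->
  Ldn_v (Psi l m n) u v = (RtoC (dn_c l n) * Psi l m (n - 1) u v)%C.
Proof.
  intros H Hn. rewrite Ldn_v_swap.
  rewrite Psi_swapF by auto. rewrite Ldn_Psi by (auto using valid_swap).
  rewrite Psi_swap; auto. destruct H; split; lia.
Qed.

Definition top_c (l : nat) : R := (harm_c l (Z.of_nat l) * dlegendre l l 0) ^ 2.

Lemma top_c_neq0 l : top_c l <> 0.
Proof.
  unfold top_c. apply pow_nonzero. apply Rmult_integral_contrapositive_currified.
  apply harm_c_neq0; lia. apply dlegendre_diag_neq0.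
Qed.

Lemma valid_top l : valid_lmn l (Z.of_nat l) (Z.of_nat l).
Proof. split; lia. Qed.

Lemma Psi_top l u v : Psi l (Z.of_nat l) (Z.of_nat l) u v = (RtoC (top_c l) * Phi l u v)%C.
Proof.
  rewrite Psi_harm by apply valid_top. unfold Phi, sepF, zpow, harm, zsgn, top_c, legR.
  replace (Z.abs_nat (Z.of_nat l)) with l by lia.
  replace (0 <=? Z.of_nat l)%Z with true by (symmetry; apply Z.leb_le; lia).
  rewrite Nat.sub_diag. rewrite !(dlegendre_diag l).
  simpl pow. replace (l + (l + 0))%nat with (2 * l)%nat by lia. rewrite !RtoC_mult. ring.
Qed.

Definition qzpow (K : nat) (x : R3) : C := (RtoC (qpoly K x) * zpow K x)%C.

(** * Finite combinations of the Psi_lmn *)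

Record Term := mkT { tl : nat; tm : Z; tn : Z; tc : C }.

Definition tvalid (it : Term) : Prop := valid_lmn (tl it) (tm it) (tn it).

Fixpoint psum (xs : list Term) : Fun6 :=
  match xs with
  | nil => zeroF
  | it :: ys => fun u v => (tc it * Psi (tl it) (tm it) (tn it) u v + psum ys u v)%C
  end.

Lemma Vphys_psum f : Vphys f -> exists xs, List.Forall tvalid xs /\ f = psum xs.
Proof.
  induction 1.
  - exists nil; split; auto.
  - destruct IHVphys as [xs [Hx E]]. exists (mkT l m n c :: xs). split.
    constructor; auto. subst f. reflexivity.
Qed.

Definition u_diff (F : Fun6) : Prop :=
  forall u v k, u <> origin -> (1 <= k <= 3)%nat -> exists z, has_pd k (fun w => F w v) u z.

Lemma u_diff_Psi l m n : valid_lmn l m n -> u_diff (Psi l m n).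
Proof.
  intros H u v k Hu Hk.
  destruct (ex_pd_scaled_harm l m k u Hk Hu) as [z Hz].
  pose proof (has_pd_radial_prod k _ (RtoC (harm_c l n) * harm l n v)%C (jser l) (jser1 l) (sqn v) u z Hk (is_derive_jser0 l) Hz) as K.
  exists ((z * (RtoC (harm_c l n) * harm l n v) * RtoC (jser l (sqn u * sqn v)%R) +
       RtoC (harm_c l m) * harm l m u * (RtoC (harm_c l n) * harm l n v) * RtoC (jser1 l (sqn u * sqn v) * (2 * coord k u * sqn v))%R)%C).
  apply (has_pd_ext k _ _ u _ (fun w => eq_sym (Psi_harm l m n w v H)) K).
Qed.

Lemma u_diff_zero : u_diff zeroF.
Proof.
  intros u v k Hu Hk. exists 0%C.
  apply (has_pd_ext k (fun _ => 0%C)); [intros; reflexivity| apply has_pd_const].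
Qed.

Lemma u_diff_comb (c : C) F G : u_diff F -> u_diff G -> u_diff (fun u v => (c * F u v + G u v)%C).
Proof.
  intros HF HG u v k Hu Hk. destruct (HF u v k Hu Hk) as [a Ha].
  destruct (HG u v k Hu Hk) as [b Hb].
  exists (c * a + b)%C.
  exact (has_pd_plus k (fun w => c * F w v)%C (fun w => G w v) u _ _ (has_pd_scal k c (fun w => F w v) u a Ha) Hb).
Qed.

Lemma u_diff_psum xs : List.Forall tvalid xs -> u_diff (psum xs).
Proof. induction 1. apply u_diff_zero. apply (u_diff_comb (tc x)); auto. apply u_diff_Psi; auto. Qed.

Lemma opA_comb i j (c : C) F G u v : (1 <= i <= 3)%nat -> (1 <= j <= 3)%nat -> u_diff F -> u_diff G ->
  opA i j (fun u v => (c * F u v + G u v)%C) u v = (c * opA i j F u v + opA i j G u v)%C.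
Proof.
  intros Hi Hj HF HG. rewrite !opA_rot.
  destruct (origin_dec u) as [->|Hu].
  - rewrite !rot_origin. ring.
  - destruct (HF u v i Hu Hi) as [fi Hfi]. destruct (HF u v j Hu Hj) as [fj Hfj].
    destruct (HG u v i Hu Hi) as [gi Hgi]. destruct (HG u v j Hu Hj) as [gj Hgj].
    unfold rot.
    rewrite (pd_val _ _ _ _ (has_pd_plus _ _ _ _ _ _ (has_pd_scal _ c _ _ _ Hfi) Hgi)).
    rewrite (pd_val _ _ _ _ (has_pd_plus _ _ _ _ _ _ (has_pd_scal _ c _ _ _ Hfj) Hgj)).
    rewrite (pd_val _ _ _ _ Hfi), (pd_val _ _ _ _ Hfj), (pd_val _ _ _ _ Hgi), (pd_val _ _ _ _ Hgj).
    ring.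
Qed.

Lemma opA_zero i j u v : (1 <= i <= 3)%nat -> (1 <= j <= 3)%nat -> opA i j zeroF u v = 0%C.
Proof.
  intros Hi Hj. rewrite opA_rot. unfold rot.
  assert (Z : forall k, has_pd k (fun w => zeroF w v) u 0%C)
    by (intros; apply (has_pd_ext k (fun _ => 0%C)); [intros; reflexivity| apply has_pd_const]).
  rewrite (pd_val _ _ _ _ (Z i)), (pd_val _ _ _ _ (Z j)). ring.
Qed.

Definition v_diff (F : Fun6) : Prop := u_diff (swapF F).

Lemma v_diff_psum xs : List.Forall tvalid xs -> v_diff (psum xs).
Proof.
  induction 1; simpl. apply u_diff_zero. unfold v_diff. apply (u_diff_comb (tc x)); auto.
  fold (swapF (Psi (tl x) (tm x) (tn x))). rewrite Psi_swapF by auto.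
  apply u_diff_Psi, valid_swap; auto.
Qed.

Lemma opB_comb i j (c : C) F G u v : (1 <= i <= 3)%nat -> (1 <= j <= 3)%nat -> v_diff F -> v_diff G ->
  opB i j (fun u v => (c * F u v + G u v)%C) u v = (c * opB i j F u v + opB i j G u v)%C.
Proof.
  intros Hi Hj HF HG. change (opB i j (fun u v => (c * F u v + G u v)%C) u v) with
    (opA i j (fun u v => (c * swapF F u v + swapF G u v)%C) v u).
  rewrite opA_comb; auto.
Qed.

Lemma opB_zero i j u v : (1 <= i <= 3)%nat -> (1 <= j <= 3)%nat -> opB i j zeroF u v = 0%C.
Proof. intros. change (opB i j zeroF u v) with (opA i j zeroF v u). apply opA_zero; auto. Qed.

Definition tscale (e : Term -> C) (it : Term) : Term := mkT (tl it) (tm it) (tn it) (tc it * e it)%C.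

Lemma tscale_valid e xs : List.Forall tvalid xs -> List.Forall tvalid (map (tscale e) xs).
Proof. induction 1; simpl; constructor; auto. Qed.

Lemma opA12_psum xs u v : List.Forall tvalid xs ->
  opA 1 2 (psum xs) u v = psum (map (tscale (fun it => RtoC (IZR (tm it)))) xs) u v.
Proof.
  induction 1; simpl.
  - apply opA_zero; lia.
  - rewrite opA_comb by (auto using u_diff_Psi, u_diff_psum; lia). rewrite IHForall.
    rewrite opA12_Psi by auto. unfold tscale; simpl. ring.
Qed.

Lemma opB12_Psi l m n u v : valid_lmn l m n -> opB 1 2 (Psi l m n) u v = (RtoC (IZR n) * Psi l m n u v)%C.
Proof.
  intros H. change (opB 1 2 (Psi l m n) u v) with (opA 1 2 (swapF (Psi l m n)) v u).
  rewrite Psi_swapF by auto. rewrite opA12_Psi by (apply valid_swap; auto). rewrite Psi_swap; auto.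
  apply valid_swap; auto.
Qed.

Lemma opB12_psum xs u v : List.Forall tvalid xs ->
  opB 1 2 (psum xs) u v = psum (map (tscale (fun it => RtoC (IZR (tn it)))) xs) u v.
Proof.
  induction 1; simpl.
  - apply opB_zero; lia.
  - rewrite opB_comb by (auto using v_diff_psum; try lia; unfold v_diff; rewrite Psi_swapF by auto; apply u_diff_Psi, valid_swap; auto).
    rewrite IHForall. rewrite opB12_Psi by auto. unfold tscale; simpl. ring.
Qed.

Lemma Lup_comb (c : C) F G u v : u_diff F -> u_diff G ->
  Lup (fun u v => (c * F u v + G u v)%C) u v = (c * Lup F u v + Lup G u v)%C.
Proof. intros HF HG. unfold Lup. rewrite !opA_comb by (auto; lia). ring. Qed.

Lemma Ldn_comb (c : C) F G u v : u_diff F -> u_diff G ->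
  Ldn (fun u v => (c * F u v + G u v)%C) u v = (c * Ldn F u v + Ldn G u v)%C.
Proof. intros HF HG. unfold Ldn. rewrite !opA_comb by (auto; lia). ring. Qed.

Lemma Lup_zero u v : Lup zeroF u v = 0%C.
Proof. unfold Lup. rewrite !opA_zero by lia. ring. Qed.

Lemma Ldn_zero u v : Ldn zeroF u v = 0%C.
Proof. unfold Ldn. rewrite !opA_zero by lia. ring. Qed.

Definition tup (it : Term) : Term :=
  if (tm it <? Z.of_nat (tl it))%Z then mkT (tl it) (tm it + 1) (tn it) (tc it * RtoC (up_c (tl it) (tm it)))%C
  else mkT (tl it) (tm it) (tn it) 0%C.

Lemma tup_valid it : tvalid it -> tvalid (tup it).
Proof.
  unfold tup, tvalid. destruct it as [l m n c]; simpl. intros H.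
  destruct (Z.ltb_spec m (Z.of_nat l)); simpl; auto. apply valid_succ; auto.
Qed.

Lemma tup_Psi it u v : tvalid it ->
  (tc it * Lup (Psi (tl it) (tm it) (tn it)) u v)%C =
  (tc (tup it) * Psi (tl (tup it)) (tm (tup it)) (tn (tup it)) u v)%C.
Proof.
  destruct it as [l m n c]. unfold tup, tvalid; simpl. intros H.
  destruct (Z.ltb_spec m (Z.of_nat l)); simpl.
  - rewrite Lup_Psi by auto. ring.
  - replace m with (Z.of_nat l) in * by (destruct H; lia). rewrite Lup_Psi_top by auto. ring.
Qed.

Lemma Lup_psum xs u v : List.Forall tvalid xs -> Lup (psum xs) u v = psum (map tup xs) u v.
Proof.
  induction 1.
  - apply Lup_zero.
  - change (psum (x :: l)) with (fun u v => (tc x * Psi (tl x) (tm x) (tn x) u v + psum l u v)%C).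
    rewrite Lup_comb by (auto using u_diff_psum; apply u_diff_Psi; auto).
    rewrite IHForall. rewrite tup_Psi by auto. reflexivity.
Qed.

(* L_- L_+ = L_3^2 + L_3 - L^2, with L_3 = A_12 acting as m and L^2 as l(l+1). *)
Definition casimir (it : Term) : C :=
  RtoC (IZR (tm it) * (IZR (tm it) + 1) - INR (tl it) * (INR (tl it) + 1)).

Lemma casimir_neq it it' : tm it = tm it' -> tl it <> tl it' -> casimir it <> casimir it'.
Proof.
  intros Hm Hl E. apply Hl. unfold casimir in E. apply RtoC_inj in E. rewrite Hm in E.
  apply INR_eq. pose proof (pos_INR (tl it)). pose proof (pos_INR (tl it')). nra.
Qed.

Lemma up_c_dn_c l m : valid_lmn l m 0 -> (m < Z.of_nat l)%Z ->
  up_c l m * dn_c l (m + 1) = IZR m * (IZR m + 1) - INR l * (INR l + 1).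
Proof.
  intros H Hm. assert (h1 : harm_c l m <> 0) by (apply harm_c_neq0; destruct H; lia).
  assert (h2 : harm_c l (m + 1) <> 0) by (apply harm_c_neq0; destruct H; lia).
  unfold up_c, dn_c. replace (m + 1 - 1)%Z with m by lia.
  transitivity (raise_c l m * lower_c l (m + 1)). field; auto.
  unfold raise_c, lower_c.
  destruct (Z.leb_spec 0 m).
  - replace (0 <? m + 1)%Z with true by (symmetry; apply Z.ltb_lt; lia).
    replace (INR (Z.abs_nat (m + 1))) with (IZR m + 1) by (rewrite INR_IZR_INZ; rewrite <- plus_IZR; f_equal; lia).
    ring.
  - replace (0 <? m + 1)%Z with false by (symmetry; apply Z.ltb_ge; lia).
    replace (INR (Z.abs_nat m)) with (- IZR m) by (rewrite INR_IZR_INZ; rewrite <- opp_IZR; f_equal; lia).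
    ring.
Qed.

Lemma LdnLup_Psi l m n u v : valid_lmn l m n ->
  Ldn (Lup (Psi l m n)) u v = (casimir (mkT l m n 1) * Psi l m n u v)%C.
Proof.
  intros H. unfold casimir; simpl.
  destruct (Z.ltb_spec m (Z.of_nat l)) as [Hm|Hm].
  - rewrite (funext2 (Lup (Psi l m n)) (fun u v => (RtoC (up_c l m) * Psi l (m + 1) n u v + zeroF u v)%C))
      by (intros; rewrite Lup_Psi by auto; unfold zeroF; ring).
    rewrite Ldn_comb; [| apply u_diff_Psi, valid_succ; auto | apply u_diff_zero].
    rewrite Ldn_zero, Ldn_Psi; [| apply valid_succ; auto | destruct H; lia].
    replace (m + 1 - 1)%Z with m by lia.
    rewrite <- (up_c_dn_c l m) by (auto; destruct H; split; simpl; lia).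
    rewrite RtoC_mult. ring.
  - replace m with (Z.of_nat l) in * by (destruct H; lia).
    rewrite (funext2 (Lup (Psi l (Z.of_nat l) n)) zeroF) by (intros; apply Lup_Psi_top; auto).
    rewrite Ldn_zero. rewrite <- INR_IZR_INZ.
    replace (INR l * (INR l + 1) - INR l * (INR l + 1)) with 0 by ring.
    ring.
Qed.

Lemma u_diff_ext F G : u_diff F -> (forall u v, F u v = G u v) -> u_diff G.
Proof.
  intros HF E. now rewrite <- (funext2 F G E).
Qed.

Lemma tup_all_valid xs : List.Forall tvalid xs -> List.Forall tvalid (map tup xs).
Proof. induction 1; simpl; constructor; auto using tup_valid. Qed.

Lemma u_diff_Lup_psum xs : List.Forall tvalid xs -> u_diff (Lup (psum xs)).
Proof.
  intros Hv. apply (u_diff_ext (psum (map tup xs))); [now apply u_diff_psum, tup_all_valid|].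
  intros; symmetry; now apply Lup_psum.
Qed.

Lemma LdnLup_psum xs u v : List.Forall tvalid xs -> Ldn (Lup (psum xs)) u v = psum (map (tscale casimir) xs) u v.
Proof.
  induction 1 as [|x l Hx Hl IHForall].
  - simpl. rewrite (funext2 (Lup zeroF) zeroF) by (intros; apply Lup_zero). apply Ldn_zero.
  - rewrite (funext2 (Lup (psum (x :: l))) (fun u v => (tc x * Lup (Psi (tl x) (tm x) (tn x)) u v + Lup (psum l) u v)%C)).
    2:{ intros.
    change (psum (x :: l)) with (fun u v => (tc x * Psi (tl x) (tm x) (tn x) u v + psum l u v)%C).
        apply Lup_comb; auto using u_diff_psum; apply u_diff_Psi; auto. }
    assert (G1 : u_diff (Lup (Psi (tl x) (tm x) (tn x)))).
    { replace (Psi (tl x) (tm x) (tn x)) with (psum (mkT (tl x) (tm x) (tn x) 1 :: nil))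
        by (apply funext2; intros; simpl; unfold zeroF; ring).
      apply u_diff_Lup_psum. constructor; auto. }
    pose proof (u_diff_Lup_psum l Hl) as G2.
    rewrite Ldn_comb by auto. rewrite IHForall.
    destruct x as [l0 m0 n0 c0]. unfold tvalid in Hx; simpl in *.
    rewrite LdnLup_Psi by auto. unfold tscale, casimir; simpl. ring.
Qed.

Lemma psum_shift (ev : Term -> C) (e : C) xs u v :
  (psum (map (tscale ev) xs) u v + (- e) * psum xs u v)%C =
  psum (map (tscale (fun it => ev it - e)%C) xs) u v.
Proof.
  induction xs as [|a xs IH]; cbn [map psum].
  - unfold zeroF. ring.
  - rewrite <- IH. unfold tscale; cbn [tc tl tm tn]. ring.
Qed.

Lemma psum_filter (ev : Term -> C) (e : C) xs u v :
  psum (map (tscale (fun it => ev it - e)%C) xs) u v =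
  psum (map (tscale (fun it => ev it - e)%C)
            (filter (fun it => if Ceq_dec (ev it) e then false else true) xs)) u v.
Proof.
  induction xs as [|a xs IH]; [reflexivity|]. cbn [map filter].
  destruct (Ceq_dec (ev a) e) as [E|E]; cbn [map psum]; rewrite IH; [|reflexivity].
  unfold tscale; cbn [tc tl tm tn]. rewrite E. unfold zeroF. ring.
Qed.

Lemma filter_length_lt (A : Type) (p : A -> bool) xs x :
  In x xs -> p x = false -> (length (filter p xs) < length xs)%nat.
Proof.
  induction xs as [|a xs IH]; simpl; [tauto|]. intros [->|H] Hp.
  - rewrite Hp. pose proof (filter_length_le p xs). lia.
  - destruct (p a); simpl; specialize (IH H Hp); lia.
Qed.

Lemma filter_valid (p : Term -> bool) xs : List.Forall tvalid xs -> List.Forall tvalid (filter p xs).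
Proof.
  induction 1; simpl; auto. destruct (p x); auto.
Qed.

Fixpoint tsum (xs : list Term) : C := match xs with nil => 0%C | it :: ys => (tc it + tsum ys)%C end.

Lemma psum_single xs l0 m0 n0 :
  (forall it, In it xs -> tl it = l0 /\ tm it = m0 /\ tn it = n0) ->
  forall u v, psum xs u v = (tsum xs * Psi l0 m0 n0 u v)%C.
Proof.
  induction xs as [|a xs IH]; intros Hs u v; cbn [psum tsum].
  - unfold zeroF. ring.
  - destruct (Hs a (or_introl eq_refl)) as [-> [-> ->]].
    rewrite IH by (intros; apply Hs; right; auto). ring.
Qed.
(** * Invariant subspaces *)

Definition invariant (W : Fun6 -> Prop) : Prop :=
  is_subspace W /\
  (forall i j : nat, (1 <= i <= 3)%nat -> (1 <= j <= 3)%nat -> forall f, W f -> W (opA i j f)) /\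
  (forall i j : nat, (1 <= i <= 3)%nat -> (1 <= j <= 3)%nat -> forall f, W f -> W (opB i j f)) /\
  (forall i j : nat, (1 <= i <= 3)%nat -> (1 <= j <= 3)%nat -> forall f, W f -> W (opC i j f)).

Section InvariantSubspace.

Variable W : Fun6 -> Prop.
Hypothesis HW : invariant W.

Lemma W_add f g : W f -> W g -> W (fun u v => (f u v + g u v)%C).
Proof. destruct HW as [[_ [Hadd _]] _]. apply Hadd. Qed.

Lemma W_scal (c : C) f : W f -> W (fun u v => (c * f u v)%C).
Proof. destruct HW as [[_ [_ Hscal]] _]. apply Hscal. Qed.

Lemma W_ext f g : W f -> (forall u v, f u v = g u v) -> W g.
Proof. intros Hf E. now rewrite <- (funext2 f g E). Qed.

Lemma W_unscale (c : C) f g : c <> 0%C -> W f -> (forall u v, f u v = (c * g u v)%C) -> W g.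
Proof.
  intros Hc Hf E. apply (W_ext (fun u v => (/ c * f u v)%C)); [now apply W_scal|].
  intros u v. rewrite E. now field.
Qed.

Lemma W_opA i j f : (1 <= i <= 3)%nat -> (1 <= j <= 3)%nat -> W f -> W (opA i j f).
Proof. destruct HW as [_ [HA _]]. intros; now apply HA. Qed.

Lemma W_opB i j f : (1 <= i <= 3)%nat -> (1 <= j <= 3)%nat -> W f -> W (opB i j f).
Proof. destruct HW as [_ [_ [HB _]]]. intros; now apply HB. Qed.

Lemma W_opC i j f : (1 <= i <= 3)%nat -> (1 <= j <= 3)%nat -> W f -> W (opC i j f).
Proof. destruct HW as [_ [_ [_ HC]]]. intros; now apply HC. Qed.

Ltac W_closure :=
  lazymatch goal with
  | |- W (fun u v => (_ + _)%C) => apply W_add; W_closure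
  | |- W (fun u v => (_ * _)%C) => apply W_scal; W_closure
  | |- _ => solve [apply W_opA; (assumption || lia) | apply W_opB; (assumption || lia)
                  | apply W_opC; (assumption || lia)]
  end.

Lemma W_Lup F : W F -> W (Lup F).
Proof. intros; unfold Lup; W_closure. Qed.

Lemma W_Ldn F : W F -> W (Ldn F).
Proof. intros; unfold Ldn; W_closure. Qed.

Lemma W_Lup_v F : W F -> W (Lup_v F).
Proof. intros; unfold Lup_v; W_closure. Qed.

Lemma W_Ldn_v F : W F -> W (Ldn_v F).
Proof. intros; unfold Ldn_v; W_closure. Qed.

Lemma W_Craise F : W F -> W (Craise F).
Proof. intros; unfold Craise; W_closure. Qed.

Lemma W_Clower F : W F -> W (Clower F).
Proof. intros; unfold Clower; W_closure. Qed.

Lemma W_ladder_up (T : Fun6 -> Fun6) (F : Z -> Fun6) (c : Z -> C) (a b : Z) :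
  (forall f, W f -> W (T f)) ->
  (forall k, (a <= k < b)%Z -> c k <> 0%C /\ forall u v, T (F k) u v = (c k * F (k + 1)%Z u v)%C) ->
  (a <= b)%Z -> W (F a) -> W (F b).
Proof.
  intros HT Hstep Hab. remember (Z.to_nat (b - a)) as d eqn:Hd. revert a Hstep Hab Hd.
  induction d as [|d IH]; intros a Hstep Hab Hd HFa.
  - now replace b with a by lia.
  - destruct (Hstep a ltac:(lia)) as [Hc E].
    apply (IH (a + 1)%Z); [intros; apply Hstep; lia | lia | lia |].
    exact (W_unscale _ _ _ Hc (HT _ HFa) E).
Qed.

Lemma W_ladder_down (T : Fun6 -> Fun6) (F : Z -> Fun6) (c : Z -> C) (a b : Z) :
  (forall f, W f -> W (T f)) ->
  (forall k, (a < k <= b)%Z -> c k <> 0%C /\ forall u v, T (F k) u v = (c k * F (k - 1)%Z u v)%C) ->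
  (a <= b)%Z -> W (F b) -> W (F a).
Proof.
  intros HT Hstep Hab HFb. rewrite <- (Z.opp_involutive a).
  apply (W_ladder_up T (fun k => F (- k)%Z) (fun k => c (- k)%Z) (- b) (- a)); auto;
    [|lia|now rewrite Z.opp_involutive].
  intros k Hk. destruct (Hstep (- k)%Z ltac:(lia)) as [Hc E]. split; [exact Hc|].
  intros u v. rewrite E. do 2 f_equal. lia.
Qed.

Lemma W_Psi_raise_m l m n : valid_lmn l m n -> W (Psi l m n) -> W (Psi l (Z.of_nat l) n).
Proof.
  intros [Hm Hn]. apply (W_ladder_up Lup (fun k => Psi l k n) (fun k => RtoC (up_c l k)));
    [exact W_Lup | | lia].
  intros k Hk. split; [apply RtoC_neq0, up_c_neq0; lia|].
  intros; apply Lup_Psi; [split|]; lia.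
Qed.

Lemma W_Psi_raise_n l m n : valid_lmn l m n -> W (Psi l m n) -> W (Psi l m (Z.of_nat l)).
Proof.
  intros [Hm Hn]. apply (W_ladder_up Lup_v (fun k => Psi l m k) (fun k => RtoC (up_c l k)));
    [exact W_Lup_v | | lia].
  intros k Hk. split; [apply RtoC_neq0, up_c_neq0; lia|].
  intros; apply Lup_v_Psi; [split|]; lia.
Qed.

Lemma W_Psi_lower_m l m n : valid_lmn l m n -> W (Psi l (Z.of_nat l) n) -> W (Psi l m n).
Proof.
  intros [Hm Hn]. apply (W_ladder_down Ldn (fun k => Psi l k n) (fun k => RtoC (dn_c l k)));
    [exact W_Ldn | | lia].
  intros k Hk. split; [apply RtoC_neq0, dn_c_neq0; lia|].
  intros; apply Ldn_Psi; [split|]; lia.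
Qed.

Lemma W_Psi_lower_n l m n : valid_lmn l m n -> W (Psi l m (Z.of_nat l)) -> W (Psi l m n).
Proof.
  intros [Hm Hn]. apply (W_ladder_down Ldn_v (fun k => Psi l m k) (fun k => RtoC (dn_c l k)));
    [exact W_Ldn_v | | lia].
  intros k Hk. split; [apply RtoC_neq0, dn_c_neq0; lia|].
  intros; apply Ldn_v_Psi; [split|]; lia.
Qed.

Lemma W_Phi_of_Psi l : W (Psi l (Z.of_nat l) (Z.of_nat l)) -> W (Phi l).
Proof.
  intros HP. apply (W_unscale (RtoC (top_c l)) _ _ (RtoC_neq0 _ (top_c_neq0 l)) HP).
  intros; apply Psi_top.
Qed.

Lemma W_Psi_of_Phi l : W (Phi l) -> W (Psi l (Z.of_nat l) (Z.of_nat l)).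
Proof.
  intros HP. apply (W_ext (fun u v => (RtoC (top_c l) * Phi l u v)%C)); [now apply W_scal|].
  intros; symmetry; apply Psi_top.
Qed.

Lemma W_Phi_S L : W (Phi L) -> W (Phi (S L)).
Proof.
  intros HP. apply (W_unscale (RtoC (2 * INR L + 1)) (Craise (Phi L))).
  - apply RtoC_neq0. pose proof (pos_INR L). lra.
  - now apply W_Craise.
  - intros; apply Craise_Phi.
Qed.

Lemma W_sepF_Ldn P dP Q l (c : C) P' : grad P dP -> c <> 0%C ->
  (forall x, lowerP P x = (c * P' x)%C) -> W (sepF P Q (jser l)) -> W (sepF P' Q (jser l)).
Proof.
  intros HP Hc E HF. apply (W_unscale c (Ldn (sepF P Q (jser l)))); auto using W_Ldn.
  intros u v. rewrite (Ldn_sepF P dP Q l u v HP), E. unfold sepF. ring.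
Qed.

Lemma W_sepF_Ldn_v P Q dQ l (c : C) Q' : grad Q dQ -> c <> 0%C ->
  (forall x, lowerP Q x = (c * Q' x)%C) -> W (sepF P Q (jser l)) -> W (sepF P Q' (jser l)).
Proof.
  intros HQ Hc E HF. apply (W_unscale c (Ldn_v (sepF P Q (jser l)))); auto using W_Ldn_v.
  intros u v. rewrite (Ldn_v_sepF P Q dQ l u v HQ), E. unfold sepF. ring.
Qed.

(* Two lowerings in u and two in v turn [zeta^(K+2)] into [qpoly K * zeta^K] on each side. *)
Lemma W_Qfun K : W (Phi (S (S K))) -> W (Qfun K).
Proof.
  intros HP. unfold Phi in HP.
  assert (c1 : RtoC (2 * INR (S (S K))) <> 0%C)
    by (apply RtoC_neq0; pose proof (lt_0_INR (S (S K)) ltac:(lia)); lra).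
  assert (c2 : RtoC (2 * INR (S K) + 1) <> 0%C)
    by (apply RtoC_neq0; pose proof (pos_INR (S K)); lra).
  assert (A1 : W (sepF (x3zpow (S K)) (zpow (S (S K))) (jser (S (S K)))))
    by (apply (W_sepF_Ldn _ (dzpow (S (S K))) _ _ _ _ (grad_zpow _) c1 (lowerP_zpow _) HP)).
  assert (A2 : W (sepF (qzpow K) (zpow (S (S K))) (jser (S (S K)))))
    by (apply (W_sepF_Ldn _ (dx3zpow (S K)) _ _ _ _ (grad_x3zpow _) c2 (lowerP_x3zpow _) A1)).
  assert (A3 : W (sepF (qzpow K) (x3zpow (S K)) (jser (S (S K)))))
    by (apply (W_sepF_Ldn_v _ _ (dzpow (S (S K))) _ _ _ (grad_zpow _) c1 (lowerP_zpow _) A2)).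
  assert (A4 : W (sepF (qzpow K) (qzpow K) (jser (S (S K)))))
    by (apply (W_sepF_Ldn_v _ _ (dx3zpow (S K)) _ _ _ (grad_x3zpow _) c2 (lowerP_x3zpow _) A3)).
  apply (W_ext _ _ A4). intros u v. unfold sepF, qzpow, Qfun, zpow. rewrite !RtoC_mult. ring.
Qed.

Lemma W_Phi_pred K : W (Phi (S K)) -> W (Phi (S (S K))) -> W (Phi K).
Proof.
  intros H1 H2.
  assert (c : RtoC (4 * INR (S K) ^ 2 / (2 * INR (S K) + 1)) <> 0%C).
  { apply RtoC_neq0. pose proof (lt_0_INR (S K) ltac:(lia)).
    apply Rgt_not_eq, Rdiv_lt_0_compat; nra. }
  apply (W_unscale _ (fun u v => (Clower (Phi (S K)) u v
                                  + (- RtoC (2 * INR (S K) + 1)) * Qfun K u v)%C) _ c).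
  - apply W_add; [now apply W_Clower|]. apply W_scal, W_Qfun, H2.
  - intros u v. rewrite Clower_Phi. ring.
Qed.

Lemma W_Phi_all L0 : W (Phi L0) -> forall L, W (Phi L).
Proof.
  intros H0.
  assert (Up : forall k, W (Phi (L0 + k))).
  { induction k; [now rewrite Nat.add_0_r|]. rewrite Nat.add_succ_r. now apply W_Phi_S. }
  assert (Down : forall k L, (L0 - k <= L)%nat -> W (Phi L)).
  { induction k as [|k IH]; intros L HL.
    - replace L with (L0 + (L - L0))%nat by lia. apply Up.
    - destruct (le_lt_dec (L0 - k) L); [now apply IH|].
      apply W_Phi_pred; apply IH; lia. }
  intros L. apply (Down L0). lia.
Qed.

Lemma W_Psi_all : (forall L, W (Phi L)) -> forall l m n, valid_lmn l m n -> W (Psi l m n).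
Proof.
  intros HPhi l m n Hv.
  apply W_Psi_lower_n; auto. apply W_Psi_lower_m; [destruct Hv; split; lia|].
  now apply W_Psi_of_Phi.
Qed.

Definition W_shorter (xs : list Term) : Prop :=
  exists ys, List.Forall tvalid ys /\ (length ys < length xs)%nat /\ W (psum ys) /\ psum ys <> zeroF.

(* [T - e] kills the terms of eigenvalue [e]; it cannot kill two different eigenvalues at
   once without killing the whole sum. *)
Lemma W_split (T : Fun6 -> Fun6) (ev : Term -> C) xs it1 it2 :
  (forall f, W f -> W (T f)) ->
  (forall ys, List.Forall tvalid ys -> forall u v, T (psum ys) u v = psum (map (tscale ev) ys) u v) ->
  List.Forall tvalid xs -> In it1 xs -> In it2 xs -> ev it1 <> ev it2 ->
  W (psum xs) -> psum xs <> zeroF -> W_shorter xs.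
Proof.
  intros HT HTs Hv I1 I2 Hne Wf Hnz.
  set (ys e := map (tscale (fun it => ev it - e)%C)
                   (filter (fun it => if Ceq_dec (ev it) e then false else true) xs)).
  assert (YE : forall e u v, psum (ys e) u v = (T (psum xs) u v + (- e) * psum xs u v)%C).
  { intros e u v. rewrite HTs, psum_shift by auto. unfold ys. symmetry; apply psum_filter. }
  assert (Yshort : forall it, In it xs -> W_shorter xs \/ psum (ys (ev it)) = zeroF).
  { intros it Hit. destruct (classic (psum (ys (ev it)) = zeroF)) as [Z|Z]; [now right|left].
    exists (ys (ev it)). repeat split; auto.
    - apply tscale_valid, filter_valid, Hv.
    - unfold ys. rewrite length_map. apply (filter_length_lt _ _ _ it Hit).
      now destruct (Ceq_dec (ev it) (ev it)).
    - apply (W_ext _ _ (W_add _ _ (HT _ Wf) (W_scal (- ev it) _ Wf))).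
      intros; symmetry; apply YE. }
  destruct (Yshort it1 I1) as [|Z1]; [assumption|].
  destruct (Yshort it2 I2) as [|Z2]; [assumption|].
  exfalso. apply Hnz, funext2. intros u v.
  pose proof (f_equal (fun F => F u v) Z1) as A1. pose proof (f_equal (fun F => F u v) Z2) as A2.
  cbv beta in A1, A2. rewrite YE in A1, A2. unfold zeroF in *.
  assert (Hd : (ev it2 - ev it1)%C <> 0%C).
  { intros E. apply Hne. replace (ev it2) with ((ev it2 - ev it1) + ev it1)%C by ring.
    rewrite E. ring. }
  assert (E : ((ev it2 - ev it1) * psum xs u v = 0)%C).
  { transitivity ((T (psum xs) u v + - ev it1 * psum xs u v)
                  - (T (psum xs) u v + - ev it2 * psum xs u v))%C; [ring|].
    rewrite A1, A2. ring. }
  replace (psum xs u v) with (/ (ev it2 - ev it1) * ((ev it2 - ev it1) * psum xs u v))%C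
    by (field; exact Hd).
  rewrite E. ring.
Qed.

Lemma W_psum_reduce xs : List.Forall tvalid xs -> W (psum xs) -> psum xs <> zeroF ->
  W_shorter xs \/ exists l m n, valid_lmn l m n /\ W (Psi l m n).
Proof.
  intros Hv Wf Hnz. destruct xs as [|it0 rest]; [contradiction|].
  set (xs := it0 :: rest) in *. assert (I0 : In it0 xs) by now left.
  destruct (classic (exists it, In it xs /\ tm it <> tm it0)) as [[it [Hi Hm]]|Nm].
  { left. apply (W_split (opA 1 2) (fun it => RtoC (IZR (tm it))) xs it it0);
      auto using opA12_psum.
    - intros; apply W_opA; auto; lia.
    - intros E. apply Hm, eq_IZR, RtoC_inj, E. }
  destruct (classic (exists it, In it xs /\ tn it <> tn it0)) as [[it [Hi Hn]]|Nn].
  { left. apply (W_split (opB 1 2) (fun it => RtoC (IZR (tn it))) xs it it0);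
      auto using opB12_psum.
    - intros; apply W_opB; auto; lia.
    - intros E. apply Hn, eq_IZR, RtoC_inj, E. }
  assert (Am : forall it, In it xs -> tm it = tm it0)
    by (intros it Hi; apply NNPP; intros E; apply Nm; now exists it).
  destruct (classic (exists it, In it xs /\ tl it <> tl it0)) as [[it [Hi Hl]]|Nl].
  { left. apply (W_split (fun f => Ldn (Lup f)) casimir xs it it0); auto using LdnLup_psum.
    - intros; now apply W_Ldn, W_Lup.
    - apply casimir_neq; auto. }
  right. exists (tl it0), (tm it0), (tn it0). split; [now inversion Hv|].
  assert (Hs : forall u v, psum xs u v = (tsum xs * Psi (tl it0) (tm it0) (tn it0) u v)%C).
  { apply psum_single. intros it Hi. split; [|split]; [| now apply Am |].
    - apply NNPP. intros E. apply Nl. now exists it.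
    - apply NNPP. intros E. apply Nn. now exists it. }
  assert (Hc : tsum xs <> 0%C).
  { intros E. apply Hnz, funext2. intros u v. rewrite Hs, E. unfold zeroF. ring. }
  exact (W_unscale (tsum xs) (psum xs) _ Hc Wf Hs).
Qed.

Lemma W_has_Psi xs : List.Forall tvalid xs -> W (psum xs) -> psum xs <> zeroF ->
  exists l m n, valid_lmn l m n /\ W (Psi l m n).
Proof.
  induction xs as [xs IH] using (induction_ltof1 _ (@length Term)).
  intros Hv Wf Hnz.
  destruct (W_psum_reduce xs Hv Wf Hnz) as [[ys [Hys [Hlt [Wy Hny]]]]|]; [|assumption].
  exact (IH ys Hlt Hys Wy Hny).
Qed.

End InvariantSubspace.

Theorem mainTheorem6 (W : Fun6 -> Prop)
  (HW : is_subspace W)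
  (Hsub : forall f, W f -> Vphys f)
  (Hnz : exists f, W f /\ f <> zeroF)
  (HA : forall i j : nat, (1 <= i <= 3)%nat -> (1 <= j <= 3)%nat ->
          forall f, W f -> W (opA i j f))
  (HB : forall i j : nat, (1 <= i <= 3)%nat -> (1 <= j <= 3)%nat ->
          forall f, W f -> W (opB i j f))
  (HC : forall i j : nat, (1 <= i <= 3)%nat -> (1 <= j <= 3)%nat ->
          forall f, W f -> W (opC i j f)) :
  forall f, W f <-> Vphys f.
Proof.
  assert (HWi : invariant W) by (repeat split; auto; apply HW).
  destruct Hnz as [f0 [Wf0 Nf0]].
  destruct (Vphys_psum f0 (Hsub f0 Wf0)) as [xs [Hv ->]].
  destruct (W_has_Psi W HWi xs Hv Wf0 Nf0) as [l [m [n [Hlmn WP]]]].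
  assert (WPhi : W (Phi l)).
  { apply (W_Phi_of_Psi W HWi), (W_Psi_raise_n W HWi l (Z.of_nat l) n);
      [destruct Hlmn; split; lia|].
    exact (W_Psi_raise_m W HWi l m n Hlmn WP). }
  pose proof (W_Psi_all W HWi (W_Phi_all W HWi l WPhi)) as WPsi.
  intros f. split; [apply Hsub|].
  induction 1 as [|l' m' n' c f Hv' _ IH]; [apply HW|].
  apply W_add; auto. apply W_scal; auto.
Qed.
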